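(* Let $X$ be a mixed-exponential Lévy process with $\psi'(0)<0$, let $q>0$, $\theta>0$, $\lambda\in(0,\lambda^*]$, and assume that the roots $\rho$ of $\Psi(-\mathrm i\rho)=-\lambda$ and the roots of $\Psi(-\mathrm i\rho)=q$ are all distinct, and that $\bar\phi(-\lambda)$, $\rho^+_k(-\lambda)$ ($k=0,\dots,m^+$), $-\theta$, $\rho_j^-(q)$ ($j=0,\dots,m^-$) are all distinct. Let $\widehat\mu_\lambda$ be the rational function $\widehat\mu_\lambda(\theta)=\frac{\bar\phi(-\lambda)}{\bar\phi(-\lambda)+\theta}\frac{\rho_0^+(-\lambda)}{\rho_0^+(-\lambda)+\theta}\prod_{j=1}^{m^+}\frac{1+\theta/\alpha_j^+}{1+\theta/\rho_j^+(-\lambda)}$. Then for every $a\in(0,\bar\phi(-\lambda))$, $$\frac1{2\pi\mathrm i}\int_{a-\mathrm i\infty}^{a+\mathrm i\infty}\frac{\Psi^+(q,\mathrm i\theta)\,\widehat\mu_\lambda(-u)\,\Psi^-(q,-\mathrm iu)}{u+\theta}\,du=\frac{q}{q+\lambda}\widehat\mu_\lambda(\theta).$$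
   Context: Mixed-exponential Lévy process: $X_t=X_0+\eta t+\sigma W_t+\sum_{j=1}^{N_t}U_j$ ($W$ Wiener, $\sigma>0$, $N$ Poisson of rate $\ell$, $U_j$ i.i.d. with density $pf_+ +(1-p)f_-$, $f_\pm(x)=\sum_{k=1}^{m^\pm}a_k^\pm\alpha_k^\pm e^{-\alpha_k^\pm|x|}\mathbf 1_{\mathbb R^+}(\pm x)$ probability densities, $\alpha_k^\pm>0$). Characteristic exponent $\Psi(\theta)=-\frac{\sigma^2}2\theta^2+\mathrm i\eta\theta+p\sum_k a_k^+\frac{\mathrm i\theta}{\alpha_k^+-\mathrm i\theta}-(1-p)\sum_j a_j^-\frac{\mathrm i\theta}{\alpha_j^-+\mathrm i\theta}$; $\psi(\theta)=\Psi(-\mathrm i\theta)$, $-\lambda^*=\inf\psi=\psi(\theta^* )<0$, $\bar\phi$ the inverse of $\psi$ left of $\theta^*$. For $q>0$, $\rho_k^+(q)$ ($k=0..m^+$) and $\rho_j^-(q)$ ($j=0..m^-$) are the roots of $\Psi(-\mathrm i\rho)=q$ with positive, resp. negative, real part; $\rho_k^+(-\lambda)$ are the roots of $\Psi(-\mathrm i\rho)=-\lambda$ with $\Re\rho>\bar\phi(-\lambda)$. Wiener–Hopf factors: $\Psi^+(q,\theta)=\big(1-\frac{\mathrm i\theta}{\rho_0^+(q)}\big)^{-1}\prod_{k=1}^{m^+}\frac{1-\mathrm i\theta/\alpha_k^+}{1-\mathrm i\theta/\rho_k^+(q)}$, $\Psi^-(q,\theta)=\big(1-\frac{\mathrm i\theta}{\rho_0^-(q)}\big)^{-1}\prod_{k=1}^{m^-}\frac{1+\mathrm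 i\theta/\alpha_k^-}{1-\mathrm i\theta/\rho_k^-(q)}$. *)

From Stdlib Require Import Reals List.
Open Scope R_scope.

Definition Cx : Type := (R * R)%type.
Definition Re (z : Cx) : R := fst z.
Definition Im (z : Cx) : R := snd z.
Definition RtoC (x : R) : Cx := (x, 0).
Definition C0 : Cx := (0, 0).
Definition C1 : Cx := (1, 0).
Definition Ci : Cx := (0, 1).
Definition Cadd (z w : Cx) : Cx := (fst z + fst w, snd z + snd w).
Definition Copp (z : Cx) : Cx := (- fst z, - snd z).
Definition Csub (z w : Cx) : Cx := Cadd z (Copp w).
Definition Cmul (z w : Cx) : Cx :=
  (fst z * fst w - snd z * snd w, fst z * snd w + snd z * fst w).
Definition Cinv (z : Cx) : Cx :=
  (fst z / (fst z ^ 2 + snd z ^ 2), - snd z / (fst z ^ 2 + snd z ^ 2)).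
Definition Cdiv (z w : Cx) : Cx := Cmul z (Cinv w).
Definition Cnorm (z : Cx) : R := sqrt (fst z ^ 2 + snd z ^ 2).

(* sum_{k=1}^n f k  and  prod_{k=1}^n f k *)
Fixpoint Rsum1 (n : nat) (f : nat -> R) : R :=
  match n with O => 0 | S n' => Rsum1 n' f + f n end.
Fixpoint Csum1 (n : nat) (f : nat -> Cx) : Cx :=
  match n with O => C0 | S n' => Cadd (Csum1 n' f) (f n) end.
Fixpoint Cprod1 (n : nat) (f : nat -> Cx) : Cx :=
  match n with O => C1 | S n' => Cmul (Cprod1 n' f) (f n) end.

Definition C_deriv (f : Cx -> Cx) (z d : Cx) : Prop :=
  forall eps, eps > 0 -> exists del, del > 0 /\
    forall h : Cx, h <> C0 -> Cnorm h < del ->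
      Cnorm (Csub (Cdiv (Csub (f (Cadd z h)) (f z)) h) d) < eps.

Definition improper_RInt (f : R -> R) (l : R) : Prop :=
  (forall a b, inhabited (Riemann_integrable f a b)) /\
  forall eps, eps > 0 -> exists T, forall a b (pr : Riemann_integrable f a b),
      a <= - T -> T <= b -> Rabs (RiemannInt pr - l) < eps.

(* (1/(2 pi i)) int_{a - i oo}^{a + i oo} f(u) du  converges (as an improper
   integral) and equals L.  Parametrisation u = a + i t, du = i dt. *)
Definition vertical_integral (f : Cx -> Cx) (a : R) (L : Cx) : Prop :=
  let g := fun t : R =>
    Cmul (Cinv (Cmul (RtoC (2 * PI)) Ci)) (Cmul (f (Cadd (RtoC a) (Cmul Ci (RtoC t)))) Ci) in
  improper_RInt (fun t => Re (g t)) (Re L) /\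
  improper_RInt (fun t => Im (g t)) (Im L).

Record MEproc := {
  sigma : R; eta : R; pp : R;
  mplus : nat; mminus : nat;
  aplus : nat -> R; alplus : nat -> R;     (* a_k^+, alpha_k^+, k = 1..m^+ *)
  aminus : nat -> R; alminus : nat -> R    (* a_j^-, alpha_j^-, j = 1..m^- *)
}.

(* standing assumptions: sigma > 0, p in [0,1], f_+ and f_- probability
   densities (nonnegative, total mass sum_k a_k = 1), alpha_k^pm > 0 *)
Definition ME_valid (X : MEproc) : Prop :=
  sigma X > 0 /\ 0 <= pp X <= 1 /\
  (forall k, (1 <= k <= mplus X)%nat -> alplus X k > 0) /\
  (forall k, (1 <= k <= mminus X)%nat -> alminus X k > 0) /\
  Rsum1 (mplus X) (aplus X) = 1 /\ Rsum1 (mminus X) (aminus X) = 1 /\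
  (forall x, x > 0 -> 0 <= Rsum1 (mplus X) (fun k => aplus X k * alplus X k * exp (- alplus X k * x))) /\
  (forall x, x > 0 -> 0 <= Rsum1 (mminus X) (fun k => aminus X k * alminus X k * exp (- alminus X k * x))).

Definition Psi (X : MEproc) (th : Cx) : Cx :=
  let ith := Cmul Ci th in
  Cadd (Cadd (Cmul (RtoC (- sigma X ^ 2 / 2)) (Cmul th th)) (Cmul (RtoC (eta X)) ith))
   (Csub
     (Cmul (RtoC (pp X)) (Csum1 (mplus X) (fun k =>
        Cmul (RtoC (aplus X k)) (Cdiv ith (Csub (RtoC (alplus X k)) ith)))))
     (Cmul (RtoC (1 - pp X)) (Csum1 (mminus X) (fun j =>
        Cmul (RtoC (aminus X j)) (Cdiv ith (Cadd (RtoC (alminus X j)) ith)))))).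

Definition psiC (X : MEproc) (z : Cx) : Cx := Psi X (Cmul (Copp Ci) z).
Definition psi (X : MEproc) (x : R) : R := Re (psiC X (RtoC x)).

Definition psi_dom (X : MEproc) (x : R) : Prop :=
  (forall k, (1 <= k <= mplus X)%nat -> x < alplus X k) /\
  (forall j, (1 <= j <= mminus X)%nat -> - alminus X j < x).

Definition not_pole (X : MEproc) (z : Cx) : Prop :=
  (forall k, (1 <= k <= mplus X)%nat -> z <> RtoC (alplus X k)) /\
  (forall j, (1 <= j <= mminus X)%nat -> z <> RtoC (- alminus X j)).

Definition is_root (X : MEproc) (c : Cx) (z : Cx) : Prop :=
  not_pole X z /\ psiC X z = c.

(* all roots of Psi(-i rho) = c are distinct (simple) *)
Definition simple_roots (X : MEproc) (c : Cx) : Prop :=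
  forall z, is_root X c z -> forall d, C_deriv (psiC X) z d -> d <> C0.

Definition root_enum (X : MEproc) (c : Cx) (P : Cx -> Prop) (n : nat) (r : nat -> Cx) : Prop :=
  (forall k, (k <= n)%nat -> is_root X c (r k) /\ P (r k)) /\
  (forall k l, (k <= n)%nat -> (l <= n)%nat -> r k = r l -> k = l) /\
  (forall z, is_root X c z -> P z -> exists k, (k <= n)%nat /\ z = r k).

(* Wiener-Hopf factors, given the roots rho_k^+(q) (rp) resp. rho_j^-(q) (rm) *)
Definition Psi_plus (X : MEproc) (rp : nat -> Cx) (xi : Cx) : Cx :=
  let ixi := Cmul Ci xi in
  Cmul (Cinv (Csub C1 (Cdiv ixi (rp O))))
    (Cprod1 (mplus X) (fun k =>
       Cdiv (Csub C1 (Cdiv ixi (RtoC (alplus X k)))) (Csub C1 (Cdiv ixi (rp k))))).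

Definition Psi_minus (X : MEproc) (rm : nat -> Cx) (xi : Cx) : Cx :=
  let ixi := Cmul Ci xi in
  Cmul (Cinv (Csub C1 (Cdiv ixi (rm O))))
    (Cprod1 (mminus X) (fun k =>
       Cdiv (Cadd C1 (Cdiv ixi (RtoC (alminus X k)))) (Csub C1 (Cdiv ixi (rm k))))).

(* hat mu_lambda, given phibar(-lambda) = phib and rl k = rho_k^+(-lambda) *)
Definition mu_hat (X : MEproc) (phib : R) (rl : nat -> Cx) (z : Cx) : Cx :=
  Cmul (Cmul (Cdiv (RtoC phib) (Cadd (RtoC phib) z)) (Cdiv (rl O) (Cadd (rl O) z)))
    (Cprod1 (mplus X) (fun j =>
       Cdiv (Cadd C1 (Cdiv z (RtoC (alplus X j)))) (Cadd C1 (Cdiv z (rl j))))).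

(* The integrand is rational: by the product forms of Psi^+, Psi^- and mu_hat it is
   P(u) / prod_{c in S} (u - c), with S = {phibar, rho^+_k(-lam), -theta, rho^-_j(q)}
   and deg P <= |S| - 2.  The proof combines three general facts, developed in order:
   1. partial fractions (Lagrange interpolation) for polynomial functions on C, and the
      vanishing of the sum of the residues when deg P <= |S| - 2;
   2. a residue theorem on vertical lines: for a sum of simple poles with total residue
      zero, an explicit atan/log primitive shows that the improper integral picks up
      exactly the residues left of the line;
   3. the Wiener-Hopf factorisation Psi^+(q, -i u) Psi^-(q, -i u) = q / (q - psi(u)),
      obtained by identifying the polynomial (q - psi) * (denominator of psi) through
      its roots rho^+_k(q), rho^-_j(q).
   The residues left of the line (at -theta and rho^-_j(q)) are minus those right of it;
   the right poles are roots of psi = -lam, where by 3 the residue is q/(q + lam) times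
   that of Psi^+(q, i theta) mu_hat(-u) / (Psi^+(q, -i u) (u + theta)); the only other
   pole of the latter is -theta, with residue mu_hat(theta). *)

From Stdlib Require Import Reals List Lra Lia FunctionalExtensionality.
From Coquelicot Require Import Coquelicot.
From Pilot Require Import Defs.
Open Scope R_scope.

Lemma Defs_Cadd : Defs.Cadd = Cplus. Proof. reflexivity. Qed.
Lemma Defs_Cmul : Defs.Cmul = Cmult. Proof. reflexivity. Qed.
Lemma Defs_Copp : Defs.Copp = Complex.Copp. Proof. reflexivity. Qed.
Lemma Defs_Csub : Defs.Csub = Cminus. Proof. reflexivity. Qed.
Lemma Defs_Cinv : Defs.Cinv = Complex.Cinv. Proof. reflexivity. Qed.
Lemma Defs_Cdiv : Defs.Cdiv = Complex.Cdiv. Proof. reflexivity. Qed.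
Lemma Defs_RtoC : Defs.RtoC = Complex.RtoC. Proof. reflexivity. Qed.
Lemma Defs_C1 : Defs.C1 = Complex.RtoC 1. Proof. reflexivity. Qed.
Lemma Defs_C0 : Defs.C0 = Complex.RtoC 0. Proof. reflexivity. Qed.
Lemma Defs_Ci : Defs.Ci = Complex.Ci. Proof. reflexivity. Qed.

Ltac to_C := rewrite ?Defs_Cadd, ?Defs_Cmul, ?Defs_Csub, ?Defs_Copp, ?Defs_Cinv,
  ?Defs_Cdiv, ?Defs_RtoC, ?Defs_C1, ?Defs_C0, ?Defs_Ci.

(* [Cx] and [C] are the same type; restating an equation at type [C] lets
   [ring] and [field] find the field structure of [C]. *)
Ltac as_C_eq := match goal with |- @eq _ ?a ?b => change (@eq C a b) end.

Notation RC := Complex.RtoC.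

Section ComplexFacts.
Open Scope C_scope.

Lemma C_ext (z w : C) : fst z = fst w -> snd z = snd w -> z = w.
Proof. destruct z, w; simpl; intros -> ->; reflexivity. Qed.

Lemma Csub_neq0 (x y : C) : x <> y -> x - y <> 0.
Proof.
  intros H E. apply H. apply (f_equal (fun w => w + y)) in E.
  rewrite Cplus_0_l in E. rewrite <- E. ring.
Qed.

Lemma Csub_neq0_fst (z w : C) : fst z <> fst w -> z - w <> 0.
Proof. intros H. apply Csub_neq0. intros ->. apply H. reflexivity. Qed.

Lemma C_neq0_fst (z : C) : fst z <> 0%R -> z <> 0.
Proof. intros H ->. apply H. reflexivity. Qed.

Lemma RC_pos_neq0 (x : R) : x > 0 -> RC x <> 0.
Proof. intros H E. inversion E. lra. Qed.

Definition Ceq_dec (x y : C) : {x = y} + {x <> y}.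
Proof.
  destruct x as [a b], y as [c d].
  destruct (Req_EM_T a c) as [->|H]; [destruct (Req_EM_T b d) as [->|H']|].
  - left; reflexivity.
  - right; intro E; inversion E; auto.
  - right; intro E; inversion E; auto.
Defined.

Lemma Cmult_integral (z w : C) : z * w = 0 -> z = 0 \/ w = 0.
Proof.
  intros H. destruct (Ceq_dec z 0) as [->|Hz]; [left; reflexivity|right].
  replace w with (/ z * (z * w)) by (field; auto). rewrite H. ring.
Qed.

End ComplexFacts.

Section ListSums.
Open Scope C_scope.

Definition lsum (l : list C) (f : C -> C) : C := fold_right (fun x acc => f x + acc) 0 l.
Definition lprod (l : list C) (f : C -> C) : C := fold_right (fun x acc => f x * acc) 1 l.

Lemma lsum_cons x l f : lsum (x :: l) f = f x + lsum l f. Proof. reflexivity. Qed.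
Lemma lprod_cons x l f : lprod (x :: l) f = f x * lprod l f. Proof. reflexivity. Qed.

Lemma lsum_app l1 l2 f : lsum (l1 ++ l2) f = lsum l1 f + lsum l2 f.
Proof.
  induction l1 as [|x l1 IH]; [simpl; ring|].
  rewrite <- app_comm_cons, !lsum_cons, IH. ring.
Qed.
Lemma lprod_app l1 l2 f : lprod (l1 ++ l2) f = lprod l1 f * lprod l2 f.
Proof.
  induction l1 as [|x l1 IH]; [simpl; ring|].
  rewrite <- app_comm_cons, !lprod_cons, IH. ring.
Qed.

Lemma lsum_ext l f g : (forall x, In x l -> f x = g x) -> lsum l f = lsum l g.
Proof.
  induction l as [|x l IH]; intros H; [reflexivity|].
  rewrite !lsum_cons, H by (simpl; auto).
  rewrite IH; [reflexivity|]. intros; apply H; simpl; auto.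
Qed.
Lemma lprod_ext l f g : (forall x, In x l -> f x = g x) -> lprod l f = lprod l g.
Proof.
  induction l as [|x l IH]; intros H; [reflexivity|].
  rewrite !lprod_cons, H by (simpl; auto).
  rewrite IH; [reflexivity|]. intros; apply H; simpl; auto.
Qed.

Lemma lsum_zero l : lsum l (fun _ => 0) = 0.
Proof. induction l as [|x l IH]; [reflexivity|]. rewrite lsum_cons, IH. ring. Qed.
Lemma lsum_scal l f k : lsum l f * k = lsum l (fun x => f x * k).
Proof.
  induction l as [|x l IH]; [simpl; ring|]. rewrite !lsum_cons, <- IH. ring.
Qed.
Lemma lsum_minus l f g : lsum l (fun x => f x - g x) = lsum l f - lsum l g.
Proof.
  induction l as [|x l IH]; [simpl; ring|]. rewrite !lsum_cons, IH. ring.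
Qed.

Lemma lprod_neq0 l (f : C -> C) : (forall x, In x l -> f x <> 0) -> lprod l f <> 0.
Proof.
  induction l as [|x l IH]; intros H.
  - intro E; inversion E; lra.
  - rewrite lprod_cons. apply Cmult_neq_0.
    + apply H; simpl; auto.
    + apply IH. intros; apply H; simpl; auto.
Qed.

Lemma lprod_zero l (f : C -> C) x : In x l -> f x = 0 -> lprod l f = 0.
Proof.
  induction l as [|y l IH]; intros Hin Hf; [contradiction|].
  rewrite lprod_cons. destruct Hin as [->|Hin].
  - rewrite Hf; ring.
  - rewrite IH by auto; ring.
Qed.

Lemma lprod_sub_neq0 l z : ~ In z l -> lprod l (fun c => z - c) <> 0.
Proof. intros H. apply lprod_neq0. intros x Hx. apply Csub_neq0. intros ->. auto. Qed.

Lemma lsum_single l (F : C -> C) x : NoDup l -> In x l ->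
  (forall y, In y l -> y <> x -> F y = 0) -> lsum l F = F x.
Proof.
  induction l as [|a l IH]; intros Hn Hin H; [contradiction|].
  inversion Hn; subst. rewrite lsum_cons. destruct Hin as [->|Hin].
  - rewrite (lsum_ext l F (fun _ => 0)), lsum_zero; [ring|].
    intros y Hy. apply H; simpl; auto. intros ->; contradiction.
  - rewrite IH by (auto; intros; apply H; simpl; auto).
    rewrite H by (simpl; auto; intros ->; contradiction). ring.
Qed.

End ListSums.

Section Polynomials.
Open Scope C_scope.

(* [is_poly d f]: [f] is a polynomial function of degree at most [d],
   presented through its Horner scheme. *)
Fixpoint is_poly (d : nat) (f : C -> C) : Prop :=
  match d with
  | O => exists k, forall z, f z = k
  | S d' => exists k g, is_poly d' g /\ forall z, f z = k + z * g z
  end.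

Lemma poly_ext d f g : (forall z, f z = g z) -> is_poly d f -> is_poly d g.
Proof.
  destruct d; simpl; intros E H.
  - destruct H as [k Hk]; exists k; intro z; rewrite <- E; auto.
  - destruct H as [k [h [Hh Hz]]]; exists k, h; split; auto; intro z; rewrite <- E; auto.
Qed.

Lemma poly_const d k : is_poly d (fun _ => k).
Proof.
  revert k; induction d as [|d IH]; intros k; simpl.
  - exists k; auto.
  - exists k, (fun _ => 0); split; [apply IH|intros; ring].
Qed.

Lemma poly_weaken d e f : (d <= e)%nat -> is_poly d f -> is_poly e f.
Proof.
  assert (Hsucc : forall d f, is_poly d f -> is_poly (S d) f).
  { induction d0 as [|d0 IH]; intros f0 H.
    - destruct H as [k Hk]. exists k, (fun _ => 0); split; [exists 0; auto|].
      intros z; rewrite Hk; ring.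
    - destruct H as [k [g [Hg Hz]]]. exists k, g; split; auto. }
  induction 1; auto.
Qed.

Lemma poly_add d f g : is_poly d f -> is_poly d g -> is_poly d (fun z => f z + g z).
Proof.
  revert f g; induction d as [|d IH]; intros f g Hf Hg.
  - destruct Hf as [k Hk], Hg as [k' Hk']; exists (k + k'); intro; rewrite Hk, Hk'; auto.
  - destruct Hf as [k [f' [Hf' Hf]]], Hg as [k' [g' [Hg' Hg]]].
    exists (k + k'), (fun z => f' z + g' z); split; auto.
    intro z; rewrite Hf, Hg; ring.
Qed.

Lemma poly_scal d c f : is_poly d f -> is_poly d (fun z => c * f z).
Proof.
  revert f; induction d as [|d IH]; intros f Hf.
  - destruct Hf as [k Hk]; exists (c * k); intro; rewrite Hk; auto.
  - destruct Hf as [k [f' [Hf' Hf]]]. exists (c * k), (fun z => c * f' z); split; auto.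
    intro z; rewrite Hf; ring.
Qed.

Lemma poly_mulX d f : is_poly d f -> is_poly (S d) (fun z => z * f z).
Proof. intros H. exists 0, f; split; auto. intros; ring. Qed.

Lemma poly_mul d e f g : is_poly d f -> is_poly e g -> is_poly (d + e) (fun z => f z * g z).
Proof.
  revert f; induction d as [|d IH]; intros f Hf Hg.
  - destruct Hf as [k Hk]. apply (poly_ext e (fun z => k * g z)).
    + intro; rewrite Hk; auto.
    + apply poly_scal; auto.
  - destruct Hf as [k [f' [Hf' Hf]]].
    apply (poly_ext (S (d + e)) (fun z => k * g z + z * (f' z * g z))).
    { intro z; rewrite Hf; ring. }
    apply poly_add.
    + apply poly_weaken with e; [lia|]. apply poly_scal; auto.
    + apply poly_mulX; auto.
Qed.

Lemma poly_affine b e : is_poly 1 (fun z => b * z + e).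
Proof. exists e, (fun _ => b); split; [exists b; auto|intros; ring]. Qed.

Lemma poly_lprod l : is_poly (length l) (fun z => lprod l (fun c => z - c)).
Proof.
  induction l as [|a l IH]; [exists 1; auto|].
  apply (poly_ext (1 + length l) (fun z => (1 * z + - a) * lprod l (fun c => z - c))).
  - intros; rewrite lprod_cons; ring.
  - apply poly_mul; [apply poly_affine|auto].
Qed.

Lemma poly_lsum d l F : (forall c, In c l -> is_poly d (F c)) ->
  is_poly d (fun z => lsum l (fun c => F c z)).
Proof.
  induction l as [|a l IH]; intros H; [exact (poly_const d 0)|].
  apply (poly_ext d (fun z => F a z + lsum l (fun c => F c z))); [reflexivity|].
  apply poly_add; [apply H; simpl; auto|apply IH; intros; apply H; simpl; auto].
Qed.

Lemma poly_factor d f r : is_poly (S d) f ->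
  exists h, is_poly d h /\ forall z, f z = f r + (z - r) * h z.
Proof.
  revert f; induction d as [|d IH]; intros f Hf.
  - destruct Hf as [k [g [[k' Hg] Hz]]]. exists (fun _ => k'); split; [exists k'; auto|].
    intros z; rewrite !Hz, !Hg; ring.
  - destruct Hf as [k [g [Hg Hz]]].
    destruct (IH g Hg) as [h [Hh Hgz]].
    exists (fun z => g r + z * h z); split.
    + exists (g r), h; split; auto.
    + intros z; rewrite !Hz, (Hgz z); ring.
Qed.

Lemma poly_roots_prod l : forall d (f : C -> C), is_poly d f -> NoDup l -> length l = d ->
  (forall r, In r l -> f r = 0) -> exists k, forall z, f z = k * lprod l (fun c => z - c).
Proof.
  induction l as [|r l IH]; intros d f Hf Hn Hl Hr; simpl in Hl; subst d.
  - destruct Hf as [k Hk]. exists k; intro; rewrite Hk; simpl; ring.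
  - inversion Hn as [|? ? Hrl Hnl]; subst.
    destruct (poly_factor _ f r Hf) as [h [Hh Hz]].
    assert (Hr0 : f r = 0) by (apply Hr; simpl; auto).
    destruct (IH (length l) h Hh Hnl eq_refl) as [k Hk].
    + intros r' Hr'. assert (E : f r' = 0) by (apply Hr; simpl; auto).
      rewrite Hz, Hr0, Cplus_0_l in E.
      assert (Hne : r' - r <> 0) by (apply Csub_neq0; intros ->; contradiction).
      apply Cmult_integral in E. destruct E; [contradiction|auto].
    + exists k; intro z. rewrite Hz, Hr0, Hk, lprod_cons. ring.
Qed.

Lemma poly_zero l d (f : C -> C) : is_poly d f -> NoDup l -> (d < length l)%nat ->
  (forall r, In r l -> f r = 0) -> forall z, f z = 0.
Proof.
  intros Hf Hn Hlen Hr.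
  assert (Hsp : exists l1 x l2, l = l1 ++ x :: l2 /\ length l1 = d).
  { exists (firstn d l), (nth d l 0), (skipn (S d) l). split.
    - clear -Hlen. revert d Hlen; induction l; simpl; intros d H; [lia|].
      destruct d; simpl; auto. f_equal. apply IHl; lia.
    - apply firstn_length_le; lia. }
  destruct Hsp as [l1 [x [l2 [-> Hl1]]]].
  apply NoDup_remove in Hn as [Hn1 Hx].
  destruct (poly_roots_prod l1 d f Hf (NoDup_app_remove_r _ _ Hn1) Hl1) as [k Hk].
  { intros r Hr1; apply Hr; apply in_or_app; auto. }
  assert (Hfx : f x = 0) by (apply Hr; apply in_or_app; simpl; auto).
  assert (Hp : lprod l1 (fun c => x - c) <> 0).
  { apply lprod_sub_neq0. intro; apply Hx; apply in_or_app; auto. }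
  rewrite Hk in Hfx. apply Cmult_integral in Hfx. destruct Hfx as [Hk0|]; [|contradiction].
  intros z; rewrite Hk, Hk0; ring.
Qed.

End Polynomials.

Section PartialFractions.
Open Scope C_scope.

(* For a list [l] of distinct nodes: [nodal_cofactor l c z] is the product of
   [z - c'] over the nodes [c' <> c], and [nodal_deriv l c] its value at [c]
   (the derivative at [c] of the nodal polynomial prod_{c' in l} (z - c')). *)
Definition nodal_cofactor (l : list C) (c z : C) : C :=
  lprod l (fun c' => if Ceq_dec c' c then 1 else z - c').
Definition nodal_deriv (l : list C) (c : C) : C := nodal_cofactor l c c.

(* The residue at the node [c] of the rational function f z / prod_{c' in l} (z - c'). *)
Definition residue (l : list C) (f : C -> C) (c : C) : C := f c / nodal_deriv l c.

Lemma nodal_deriv_neq0 l c : nodal_deriv l c <> 0.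
Proof.
  apply lprod_neq0. intros x _. destruct (Ceq_dec x c).
  - intro E; inversion E; lra.
  - apply Csub_neq0; auto.
Qed.

Lemma nodal_deriv_app l1 l2 c : nodal_deriv (l1 ++ l2) c = nodal_deriv l1 c * nodal_deriv l2 c.
Proof. apply lprod_app. Qed.

Lemma nodal_deriv_notin l c : ~ In c l -> nodal_deriv l c = lprod l (fun x => c - x).
Proof.
  intros H. apply lprod_ext. intros x Hx. destruct (Ceq_dec x c); auto.
  subst; contradiction.
Qed.

Lemma nodal_deriv_single c : nodal_deriv (c :: nil) c = 1.
Proof.
  unfold nodal_deriv, nodal_cofactor. rewrite lprod_cons.
  destruct (Ceq_dec c c); [|contradiction]. simpl. ring.
Qed.

Lemma nodal_cofactor_split l c z l1 l2 : l = l1 ++ c :: l2 -> ~ In c (l1 ++ l2) ->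
  nodal_cofactor l c z = lprod (l1 ++ l2) (fun c' => z - c').
Proof.
  intros -> Hn. unfold nodal_cofactor. rewrite !lprod_app, lprod_cons.
  destruct (Ceq_dec c c) as [_|H]; [|congruence].
  rewrite (lprod_ext l1 _ (fun c' => z - c')), (lprod_ext l2 _ (fun c' => z - c')); [ring| |].
  - intros x Hx; destruct (Ceq_dec x c); auto. subst; exfalso; apply Hn; apply in_or_app; auto.
  - intros x Hx; destruct (Ceq_dec x c); auto. subst; exfalso; apply Hn; apply in_or_app; auto.
Qed.

Lemma nodal_cofactor_poly l c : In c l -> NoDup l -> is_poly (pred (length l)) (nodal_cofactor l c).
Proof.
  intros Hin Hn. destruct (in_split c l Hin) as [l1 [l2 E]].
  assert (Hn' : ~ In c (l1 ++ l2)) by (subst; apply NoDup_remove_2; auto).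
  apply (poly_ext _ (fun z => lprod (l1 ++ l2) (fun c' => z - c'))).
  { intros z; symmetry; apply nodal_cofactor_split; auto. }
  replace (pred (length l)) with (length (l1 ++ l2)) by (subst; rewrite !length_app; simpl; lia).
  apply poly_lprod.
Qed.

Lemma nodal_cofactor_prod l c z : In c l -> NoDup l ->
  lprod l (fun c' => z - c') = (z - c) * nodal_cofactor l c z.
Proof.
  intros Hin Hn. destruct (in_split c l Hin) as [l1 [l2 E]].
  assert (Hn' : ~ In c (l1 ++ l2)) by (subst; apply NoDup_remove_2; auto).
  rewrite (nodal_cofactor_split l c z l1 l2 E Hn'). subst l.
  rewrite !lprod_app, lprod_cons. ring.
Qed.

Lemma nodal_cofactor_other l c c' : In c' l -> c' <> c -> nodal_cofactor l c c' = 0.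
Proof.
  intros Hin Hne. apply (lprod_zero l _ c' Hin).
  destruct (Ceq_dec c' c); [congruence|ring].
Qed.

Lemma lagrange_interpolation l (f : C -> C) z : NoDup l -> l <> nil ->
  is_poly (pred (length l)) f ->
  f z = lsum l (fun c => residue l f c * nodal_cofactor l c z).
Proof.
  intros Hn Hne Hf.
  assert (Hdiff : forall w, f w - lsum l (fun c => residue l f c * nodal_cofactor l c w) = 0).
  { apply (poly_zero l (pred (length l))); auto.
    - apply poly_add; auto.
      apply (poly_ext _ (fun w => -1 * lsum l (fun c => residue l f c * nodal_cofactor l c w))).
      { intros; ring. }
      apply poly_scal, poly_lsum. intros c Hc. apply poly_scal, nodal_cofactor_poly; auto.
    - destruct l; [congruence|]. simpl; lia.
    - intros r Hr. rewrite (lsum_single l _ r Hn Hr).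
      + unfold residue, nodal_deriv. field. apply nodal_deriv_neq0.
      + intros y Hy Hyr. rewrite nodal_cofactor_other; auto. ring. }
  specialize (Hdiff z). apply (f_equal (fun w => w + lsum l (fun c => residue l f c * nodal_cofactor l c z))) in Hdiff.
  rewrite Cplus_0_l in Hdiff. rewrite <- Hdiff. ring.
Qed.

Lemma partial_fractions l (f : C -> C) z : NoDup l -> l <> nil ->
  is_poly (pred (length l)) f -> ~ In z l ->
  f z / lprod l (fun c => z - c) = lsum l (fun c => residue l f c / (z - c)).
Proof.
  intros Hn Hne Hf Hz.
  rewrite (lagrange_interpolation l f z Hn Hne Hf). unfold Complex.Cdiv at 1.
  rewrite lsum_scal. apply lsum_ext. intros c Hc.
  assert (Hzc : z - c <> 0) by (apply Csub_neq0; intros ->; contradiction).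
  assert (Hcof : nodal_cofactor l c z <> 0).
  { intro E. apply (lprod_sub_neq0 l z Hz). rewrite (nodal_cofactor_prod l c z Hc Hn), E. ring. }
  rewrite (nodal_cofactor_prod l c z Hc Hn). field. auto.
Qed.

Lemma exists_notin (l : list C) : exists z, ~ In z l.
Proof.
  assert (H : exists M, forall c, In c l -> fst c < M).
  { induction l as [|a l [M HM]]; [exists 0%R; simpl; tauto|].
    exists (Rmax M (fst a + 1)%R). intros c [<-|Hc].
    - apply Rlt_le_trans with (fst a + 1)%R; [lra|apply Rmax_r].
    - apply Rlt_le_trans with M; [auto|apply Rmax_l]. }
  destruct H as [M HM]. exists (M, 0%R). intros Hin. specialize (HM _ Hin). simpl in HM; lra.
Qed.

(* If the numerator has degree at most |l| - 2, the residues sum to zero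
   (compare the decompositions of f and of z f). *)
Lemma residues_sum_zero l (f : C -> C) : NoDup l -> (2 <= length l)%nat ->
  is_poly (length l - 2) f -> lsum l (residue l f) = 0.
Proof.
  intros Hn Hl Hf. destruct (exists_notin l) as [z Hz].
  assert (Hne : l <> nil) by (intro E; subst l; simpl in Hl; lia).
  assert (Hf' : is_poly (pred (length l)) f) by (apply (poly_weaken (length l - 2)); [lia|auto]).
  assert (Hzf : is_poly (pred (length l)) (fun w => w * f w)).
  { replace (pred (length l)) with (S (length l - 2)) by lia. apply poly_mulX; auto. }
  assert (H1 := partial_fractions l f z Hn Hne Hf' Hz).
  assert (H2 := partial_fractions l (fun w => w * f w) z Hn Hne Hzf Hz).
  transitivity (z * lsum l (fun c => residue l f c / (z - c))
                - lsum l (fun c => residue l (fun w => w * f w) c / (z - c))).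
  - rewrite Cmult_comm, lsum_scal, <- lsum_minus. apply lsum_ext. intros c Hc.
    unfold residue. field. split; [apply nodal_deriv_neq0|].
    apply Csub_neq0; intros ->; contradiction.
  - rewrite <- H1, <- H2. field. apply lprod_sub_neq0; auto.
Qed.

Lemma residues_split l1 l2 (f : C -> C) : NoDup (l1 ++ l2) -> (2 <= length (l1 ++ l2))%nat ->
  is_poly (length (l1 ++ l2) - 2) f ->
  lsum l2 (residue (l1 ++ l2) f) = - lsum l1 (residue (l1 ++ l2) f).
Proof.
  intros Hn Hl Hf. assert (H := residues_sum_zero _ f Hn Hl Hf).
  rewrite lsum_app in H. replace (lsum l2 (residue (l1 ++ l2) f))
    with (lsum l1 (residue (l1 ++ l2) f) + lsum l2 (residue (l1 ++ l2) f)
          - lsum l1 (residue (l1 ++ l2) f)) by ring.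
  rewrite H. ring.
Qed.

End PartialFractions.

Section SimplePoleIntegrals.

(* Real part of r / (x + i (t - y)), i.e. of r / (u - c) on the line
   u = a + i t, with x = a - Re c, y = Im c, r = rho + i ka. *)
Definition pole_re (x y rho ka t : R) : R := (rho * x + ka * (t - y)) / (x ^ 2 + (t - y) ^ 2).

Definition pole_primitive (x y rho ka t : R) : R :=
  rho * atan ((t - y) / x) + ka / 2 * ln (x ^ 2 + (t - y) ^ 2).

Lemma sq_pos x : x <> 0 -> 0 < x * x.
Proof. intros H; destruct (Rtotal_order x 0) as [h|[h|h]]; [nra|contradiction|nra]. Qed.

Lemma pole_re_eq (r c : C) a t : a - fst c <> 0 ->
  fst (r / ((a, t) - c))%C = pole_re (a - fst c) (snd c) (fst r) (snd r) t.
Proof.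
  intros Hx. destruct r as [rho ka], c as [cx cy]. simpl in *.
  unfold pole_re. assert (H1 := sq_pos _ Hx). pose proof (Rle_0_sqr (t - cy)); unfold Rsqr in *.
  simpl. field. nra.
Qed.

Lemma pole_primitive_derive x y rho ka t : x <> 0 ->
  is_derive (pole_primitive x y rho ka) t (pole_re x y rho ka t).
Proof.
  intros Hx. assert (H1 := sq_pos x Hx). unfold pole_primitive, pole_re. auto_derive.
  - change R in t. rewrite !Rmult_1_r. pose proof (Rle_0_sqr (t + - y)); unfold Rsqr in *. lra.
  - change R in t. pose proof (Rle_0_sqr (t - y)); unfold Rsqr in *.
    assert (Hd : x ^ 2 + (t - y) ^ 2 <> 0) by (simpl; nra).
    assert (Hd2 : 1 + (t - y) / x * ((t - y) / x) <> 0).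
    { assert (0 <= (t - y) / x * ((t - y) / x)) by nra. lra. }
    replace (t + - y) with (t - y) by ring.
    assert (E1 : 1 + (t - y) * / x * ((t - y) * / x * 1) = (x ^ 2 + (t - y) ^ 2) / (x * x))
      by (field; auto).
    assert (E2 : x * (x * 1) + (t - y) * ((t - y) * 1) = x ^ 2 + (t - y) ^ 2) by ring.
    rewrite E1, E2. field. split; auto.
Qed.

Lemma pole_re_ex_derive x y rho ka t : x <> 0 -> ex_derive (pole_re x y rho ka) t.
Proof.
  intros Hx. assert (H1 := sq_pos x Hx). unfold pole_re. auto_derive. change R in t.
  rewrite !Rmult_1_r. pose proof (Rle_0_sqr (t + - y)); unfold Rsqr in *. lra.
Qed.

Definition sgn (x : R) : R := if Rlt_dec 0 x then 1 else -1.

Lemma sgn_div_pos p x : 0 < p -> x <> 0 -> sgn (p / x) = sgn x.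
Proof.
  intros Hp Hx. unfold sgn. destruct (Rlt_dec 0 x), (Rlt_dec 0 (p / x)); auto; exfalso.
  - apply n. apply Rdiv_lt_0_compat; lra.
  - assert (0 < p / - x) by (apply Rdiv_lt_0_compat; lra).
    replace (p / - x) with (- (p / x)) in H by (field; auto). lra.
Qed.

Lemma sgn_div_neg p x : p < 0 -> x <> 0 -> sgn (p / x) = - sgn x.
Proof.
  intros Hp Hx. replace (p / x) with ((- p) / (- x)) by (field; auto).
  rewrite sgn_div_pos by lra. unfold sgn.
  destruct (Rlt_dec 0 x), (Rlt_dec 0 (- x)); lra.
Qed.

Lemma atan_sgn v : v <> 0 -> atan v = sgn v * (PI / 2) - atan (/ v).
Proof.
  intros Hv. unfold sgn. destruct (Rlt_dec 0 v).
  - rewrite atan_inv; auto. ring.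
  - replace (/ v) with (- / (- v)) by (field; lra).
    rewrite atan_opp, atan_inv by lra. rewrite atan_opp. ring.
Qed.

(* The primitive near t = +oo or -oo, expressed in w = 1/t after removing the
   divergent term ka/2 ln (1 + t^2); [s] is the sign of (t - y)/x there. *)
Definition pole_primitive_at_infinity (s x y rho ka w : R) : R :=
  rho * (s * (PI / 2) - atan (x * w / (1 - y * w)))
  + ka / 2 * ln ((x ^ 2 * w ^ 2 + (1 - y * w) ^ 2) / (w ^ 2 + 1)).

Lemma pole_primitive_at_infinity_ex_derive s x y rho ka :
  ex_derive (pole_primitive_at_infinity s x y rho ka) 0.
Proof.
  unfold pole_primitive_at_infinity. auto_derive. repeat split.
  - replace (1 + - (y * 0)) with 1 by ring. lra.
  - replace (0 * (0 * 1) + 1) with 1 by ring. lra.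
  - match goal with |- 0 < ?e => replace e with 1 end; [lra|].
    replace (0 * (0 * 1) + 1) with 1 by ring. replace (1 + - (y * 0)) with 1 by ring. field.
Qed.

Lemma pole_primitive_at_infinity_0 s x y rho ka :
  pole_primitive_at_infinity s x y rho ka 0 = rho * s * (PI / 2).
Proof.
  unfold pole_primitive_at_infinity. replace (x * 0 / (1 - y * 0)) with 0 by (field; lra).
  replace ((x ^ 2 * 0 ^ 2 + (1 - y * 0) ^ 2) / (0 ^ 2 + 1)) with 1 by (field; lra).
  rewrite atan_0, ln_1. ring.
Qed.

Lemma pole_primitive_inverse x y rho ka t : x <> 0 -> t <> 0 -> t <> y ->
  pole_primitive x y rho ka t
  = pole_primitive_at_infinity (sgn ((t - y) / x)) x y rho ka (/ t) + ka / 2 * ln (1 + t ^ 2).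
Proof.
  intros Hx Ht Hty. unfold pole_primitive, pole_primitive_at_infinity.
  assert (Hty' : t - y <> 0) by lra.
  assert (Hv : (t - y) / x <> 0) by (unfold Rdiv; apply Rmult_integral_contrapositive_currified; auto; apply Rinv_neq_0_compat; auto).
  rewrite (atan_sgn _ Hv).
  replace (/ ((t - y) / x)) with (x * / t / (1 - y * / t)) by (field; repeat split; auto; lra).
  assert (Hq : 0 < (x ^ 2 * (/ t) ^ 2 + (1 - y * / t) ^ 2) / ((/ t) ^ 2 + 1)).
  { apply Rdiv_lt_0_compat.
    - assert (0 < x ^ 2 * (/ t) ^ 2).
      { apply Rmult_lt_0_compat; simpl; rewrite Rmult_1_r; apply sq_pos; auto.
        apply Rinv_neq_0_compat; auto. }
      assert (0 <= (1 - y * / t) ^ 2) by apply pow2_ge_0. lra.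
    - assert (0 <= (/ t) ^ 2) by apply pow2_ge_0. lra. }
  assert (H1t : 0 < 1 + t ^ 2) by (assert (0 <= t ^ 2) by apply pow2_ge_0; lra).
  replace (x ^ 2 + (t - y) ^ 2)
    with (((x ^ 2 * (/ t) ^ 2 + (1 - y * / t) ^ 2) / ((/ t) ^ 2 + 1)) * (1 + t ^ 2)).
  2:{ field. split; auto. assert (0 <= t ^ 2) by apply pow2_ge_0.
      replace (1 + t ^ 2) with (t ^ 2 + 1) in H1t by ring. lra. }
  rewrite ln_mult; auto. ring.
Qed.

End SimplePoleIntegrals.

Section ImproperIntegrals.

Lemma improper_RInt_antiderivative (f F : R -> R) (Lm Lp : R) :
  (forall t, is_derive F t (f t)) -> (forall t, continuous f t) ->
  (forall eps, eps > 0 -> exists T, forall t, T <= t -> Rabs (F t - Lp) < eps) ->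
  (forall eps, eps > 0 -> exists T, forall t, t <= - T -> Rabs (F t - Lm) < eps) ->
  improper_RInt f (Lp - Lm).
Proof.
  intros HD HC Hp Hm.
  assert (HI : forall A B, is_RInt f A B (F B - F A)).
  { intros A B. apply (is_RInt_derive F f); intros; [apply HD|apply HC]. }
  split.
  - intros A B. constructor. apply ex_RInt_Reals_0. eexists; apply HI.
  - intros eps Heps.
    destruct (Hp (eps / 2)) as [T1 H1]; [lra|]. destruct (Hm (eps / 2)) as [T2 H2]; [lra|].
    exists (Rmax T1 T2). intros A B pr HA HB.
    assert (E : RiemannInt pr = F B - F A).
    { rewrite <- RInt_Reals. apply is_RInt_unique, HI. }
    rewrite E.
    assert (HB1 := H1 B ltac:(pose proof (Rmax_l T1 T2); lra)).
    assert (HA1 := H2 A ltac:(pose proof (Rmax_r T1 T2); lra)).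
    replace (F B - F A - (Lp - Lm)) with ((F B - Lp) - (F A - Lm)) by ring.
    eapply Rle_lt_trans; [apply Rabs_triang|]. rewrite Rabs_Ropp. lra.
Qed.

Lemma limit_pinfty_of_inverse (F P : R -> R) (M : R) :
  continuity_pt P 0 -> (forall t, t > M -> F t = P (/ t)) ->
  forall eps, eps > 0 -> exists T, forall t, T <= t -> Rabs (F t - P 0) < eps.
Proof.
  intros Hc HF eps Heps. destruct (Hc eps Heps) as [d [Hd H]].
  exists (Rmax M 0 + 1 + 2 / d). intros t Ht.
  assert (Hd' : 0 < 2 / d) by (apply Rdiv_lt_0_compat; lra).
  pose proof (Rmax_l M 0). pose proof (Rmax_r M 0).
  rewrite HF by lra. apply (H (/ t)). split; [split; [exact I|]|].
  - apply not_eq_sym, Rinv_neq_0_compat; lra.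
  - simpl. unfold R_dist. rewrite Rminus_0_r, Rabs_pos_eq by (left; apply Rinv_0_lt_compat; lra).
    apply Rlt_le_trans with (/ (2 / d)).
    + apply Rinv_lt_contravar; nra.
    + replace (/ (2 / d)) with (d / 2) by (field; lra). lra.
Qed.

Lemma limit_minfty_of_inverse (F P : R -> R) (M : R) :
  continuity_pt P 0 -> (forall t, t < - M -> F t = P (/ t)) ->
  forall eps, eps > 0 -> exists T, forall t, t <= - T -> Rabs (F t - P 0) < eps.
Proof.
  intros Hc HF eps Heps.
  assert (Hc' : continuity_pt (fun w => P (- w)) 0).
  { apply continuity_pt_comp; [apply continuity_pt_opp, continuity_pt_id|].
    rewrite Ropp_0. exact Hc. }
  destruct (limit_pinfty_of_inverse (fun t => F (- t)) (fun w => P (- w)) (Rmax M 0) Hc')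
    with (eps := eps) as [T HT]; auto.
  - intros t Ht. pose proof (Rmax_l M 0). pose proof (Rmax_r M 0).
    rewrite HF by lra. f_equal. field. lra.
  - exists T. intros t Ht. rewrite Ropp_0 in HT. replace t with (- - t) by ring.
    apply HT. lra.
Qed.

End ImproperIntegrals.

Section RealListSums.

Definition rsum (l : list C) (g : C -> R) : R := fold_right (fun c acc => g c + acc) 0 l.

Lemma rsum_fst l (F : C -> C) : fst (lsum l F) = rsum l (fun c => fst (F c)).
Proof. induction l as [|x l IH]; simpl; auto. rewrite <- IH. reflexivity. Qed.
Lemma rsum_snd l (F : C -> C) : snd (lsum l F) = rsum l (fun c => snd (F c)).
Proof. induction l as [|x l IH]; simpl; auto. rewrite <- IH. reflexivity. Qed.
Lemma rsum_ext l f g : (forall x, In x l -> f x = g x) -> rsum l f = rsum l g.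
Proof. induction l as [|x l IH]; simpl; intros H; auto. rewrite H, IH; auto. Qed.
Lemma rsum_plus l f g : rsum l (fun x => f x + g x) = rsum l f + rsum l g.
Proof. induction l as [|x l IH]; simpl; [ring|]. rewrite IH; ring. Qed.
Lemma rsum_minus l f g : rsum l (fun x => f x - g x) = rsum l f - rsum l g.
Proof. induction l as [|x l IH]; simpl; [ring|]. rewrite IH; ring. Qed.
Lemma rsum_scal l f k : rsum l (fun x => k * f x) = k * rsum l f.
Proof. induction l as [|x l IH]; simpl; [ring|]. rewrite IH; ring. Qed.

Lemma rsum_derive l (A T : C -> R -> R) t :
  (forall c, In c l -> is_derive (A c) t (T c t)) ->
  is_derive (fun t => rsum l (fun c => A c t)) t (rsum l (fun c => T c t)).
Proof.
  induction l as [|x l IH]; simpl; intros H; [apply (is_derive_const 0)|].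
  apply (is_derive_plus (A x) (fun t => rsum l (fun c => A c t))); auto.
Qed.

Lemma rsum_ex_derive l (A : C -> R -> R) t :
  (forall c, In c l -> ex_derive (A c) t) -> ex_derive (fun t => rsum l (fun c => A c t)) t.
Proof.
  induction l as [|x l IH]; simpl; intros H; [apply ex_derive_const|].
  apply (ex_derive_plus (A x) (fun t => rsum l (fun c => A c t))); auto.
Qed.

Lemma list_bound (l : list C) (g : C -> R) : exists M, forall c, In c l -> Rabs (g c) < M.
Proof.
  induction l as [|x l [M H]]; [exists 0; simpl; tauto|].
  exists (Rmax M (Rabs (g x) + 1)). intros c [<-|Hc].
  - apply Rlt_le_trans with (Rabs (g x) + 1); [lra|apply Rmax_r].
  - apply Rlt_le_trans with M; [auto|apply Rmax_l].
Qed.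

End RealListSums.

(* Residue theorem on a vertical line for a finite sum of simple poles with
   total residue zero: the real part of sum_c r_c / (u - c) along u = a + i t
   has an explicit primitive (atan and log terms), whose limits at +oo and -oo
   differ by 2 pi Re of the sum of the residues left of the line. *)
Section VerticalLine.
Variables (a : R) (l : list C) (r : C -> C).
Hypothesis off_line : forall c, In c l -> fst c <> a.
Hypothesis total_residue : lsum l r = 0%C.

Definition line_re (t : R) : R :=
  rsum l (fun c => pole_re (a - fst c) (snd c) (fst (r c)) (snd (r c)) t).
Definition line_primitive (t : R) : R :=
  rsum l (fun c => pole_primitive (a - fst c) (snd c) (fst (r c)) (snd (r c)) t).
(* [s = 1] near +oo, [s = -1] near -oo. *)
Definition line_primitive_at_infinity (s w : R) : R :=
  rsum l (fun c => pole_primitive_at_infinity (s * sgn (a - fst c))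
                     (a - fst c) (snd c) (fst (r c)) (snd (r c)) w).

Lemma off_line_x c : In c l -> a - fst c <> 0.
Proof. intros Hc E. apply (off_line c Hc). lra. Qed.

Lemma line_re_eq t : Re (lsum l (fun c => r c / ((a, t) - c)))%C = line_re t.
Proof.
  unfold Re. rewrite rsum_fst. apply rsum_ext. intros c Hc.
  apply pole_re_eq, off_line_x; auto.
Qed.

Lemma line_primitive_derive t : is_derive line_primitive t (line_re t).
Proof.
  unfold line_primitive, line_re.
  apply (rsum_derive l (fun c => pole_primitive (a - fst c) (snd c) (fst (r c)) (snd (r c)))
                       (fun c => pole_re (a - fst c) (snd c) (fst (r c)) (snd (r c)))).
  intros c Hc. apply pole_primitive_derive, off_line_x; auto.
Qed.

Lemma line_re_continuous t : continuous line_re t.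
Proof.
  apply (ex_derive_continuous line_re).
  apply (rsum_ex_derive l (fun c => pole_re (a - fst c) (snd c) (fst (r c)) (snd (r c)))).
  intros c Hc. apply pole_re_ex_derive, off_line_x; auto.
Qed.

Lemma line_primitive_at_infinity_continuous s : continuity_pt (line_primitive_at_infinity s) 0.
Proof.
  apply continuity_pt_filterlim, (ex_derive_continuous (line_primitive_at_infinity s)).
  apply (rsum_ex_derive l (fun c => pole_primitive_at_infinity (s * sgn (a - fst c))
                                      (a - fst c) (snd c) (fst (r c)) (snd (r c)))).
  intros; apply pole_primitive_at_infinity_ex_derive.
Qed.

(* Beyond all poles, the primitive is a function of 1/t, the logarithmic
   terms cancelling because the residues sum to zero. *)
Lemma line_primitive_inverse : exists M,
  (forall t, t > M -> line_primitive t = line_primitive_at_infinity 1 (/ t)) /\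
  (forall t, t < - M -> line_primitive t = line_primitive_at_infinity (-1) (/ t)).
Proof.
  destruct (list_bound l snd) as [M HM]. exists (Rmax M 0).
  pose proof (Rmax_l M 0). pose proof (Rmax_r M 0).
  assert (Hka : rsum l (fun c => snd (r c)) = 0).
  { rewrite <- rsum_snd, total_residue. reflexivity. }
  assert (Hsplit : forall s t, t <> 0 ->
    (forall c, In c l -> t <> snd c /\ sgn ((t - snd c) / (a - fst c)) = s * sgn (a - fst c)) ->
    line_primitive t = line_primitive_at_infinity s (/ t)).
  { intros s t Ht Hc. unfold line_primitive, line_primitive_at_infinity.
    rewrite (rsum_ext l _ (fun c => pole_primitive_at_infinity (s * sgn (a - fst c)) (a - fst c)
        (snd c) (fst (r c)) (snd (r c)) (/ t) + (/ 2 * ln (1 + t ^ 2)) * snd (r c))).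
    - rewrite rsum_plus, rsum_scal, Hka. ring.
    - intros c Hcl. destruct (Hc c Hcl) as [Hty Hs].
      rewrite pole_primitive_inverse, Hs by (auto; apply off_line_x; auto). unfold Rdiv; ring. }
  split; intros t Ht; apply Hsplit; try lra; intros c Hc;
    specialize (HM c Hc); apply Rabs_def2 in HM; split; try lra.
  - rewrite sgn_div_pos by (lra || apply off_line_x; auto). ring.
  - rewrite sgn_div_neg by (lra || apply off_line_x; auto). ring.
Qed.

Lemma line_primitive_jump :
  line_primitive_at_infinity 1 0 - line_primitive_at_infinity (-1) 0
  = 2 * PI * Re (lsum l (fun c => if Rlt_dec (fst c) a then r c else RC 0)).
Proof.
  unfold line_primitive_at_infinity, Re. rewrite rsum_fst, <- rsum_minus.
  assert (Hrho : rsum l (fun c => fst (r c)) = 0).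
  { rewrite <- rsum_fst, total_residue. reflexivity. }
  transitivity (rsum l (fun c => (2 * PI) * fst (if Rlt_dec (fst c) a then r c else RC 0)
                                 + (- PI) * fst (r c))).
  - apply rsum_ext. intros c Hc. rewrite !pole_primitive_at_infinity_0.
    unfold sgn. destruct (Rlt_dec 0 (a - fst c)), (Rlt_dec (fst c) a); simpl; lra.
  - rewrite rsum_plus, !rsum_scal, Hrho, Rmult_0_r, Rplus_0_r. reflexivity.
Qed.

Theorem pole_sum_improper_integral :
  improper_RInt (fun t => Re (lsum l (fun c => r c / ((a, t) - c)))%C)
    (2 * PI * Re (lsum l (fun c => if Rlt_dec (fst c) a then r c else RC 0))).
Proof.
  replace (fun t => Re (lsum l (fun c => r c / ((a, t) - c)))%C) with line_re
    by (apply functional_extensionality; intros; symmetry; apply line_re_eq).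
  rewrite <- line_primitive_jump.
  destruct line_primitive_inverse as [M [Hp Hm]].
  apply (improper_RInt_antiderivative _ line_primitive).
  - apply line_primitive_derive.
  - apply line_re_continuous.
  - apply (limit_pinfty_of_inverse _ _ M); auto. apply line_primitive_at_infinity_continuous.
  - apply (limit_minfty_of_inverse _ _ M); auto. apply line_primitive_at_infinity_continuous.
Qed.

End VerticalLine.

Section VerticalIntegrals.
Open Scope C_scope.

Lemma line_point_eq (a t : R) : Cadd (RtoC a) (Cmul Ci (RtoC t)) = (a, t).
Proof. apply C_ext; simpl; ring. Qed.

Lemma lsum_left_scal (a : R) l (k : C) (r : C -> C) :
  lsum l (fun c => if Rlt_dec (fst c) a then k * r c else RC 0)
  = k * lsum l (fun c => if Rlt_dec (fst c) a then r c else RC 0).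
Proof.
  rewrite Cmult_comm, lsum_scal. apply lsum_ext. intros c _.
  destruct (Rlt_dec (fst c) a); as_C_eq; ring.
Qed.

Lemma scaled_pole_sum_improper_integral (a : R) l (r : C -> C) (k : C) :
  (forall c, In c l -> fst c <> a) -> lsum l r = 0 ->
  improper_RInt (fun t => Re (k * lsum l (fun c => r c / ((a, t) - c))))
    (2 * PI * Re (k * lsum l (fun c => if Rlt_dec (fst c) a then r c else RC 0))%C)%R.
Proof.
  intros Hoff Hsum. rewrite <- lsum_left_scal.
  replace (fun t => Re (k * lsum l (fun c => r c / ((a, t) - c))))
    with (fun t => Re (lsum l (fun c => k * r c / ((a, t) - c)))).
  - apply pole_sum_improper_integral; auto.
    rewrite (lsum_ext l _ (fun c => r c * k)) by (intros; ring).
    rewrite <- lsum_scal, Hsum. ring.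
  - apply functional_extensionality. intros t. f_equal.
    rewrite Cmult_comm, lsum_scal. apply lsum_ext. intros c _.
    unfold Complex.Cdiv. ring.
Qed.

Lemma vertical_integral_pole_sum (l : list C) (r : C -> C) (f : Cx -> Cx) (a : R) :
  (forall c, In c l -> fst c <> a) -> lsum l r = 0 ->
  (forall t, f (a, t) = lsum l (fun c => r c / ((a, t) - c))) ->
  vertical_integral f a (lsum l (fun c => if Rlt_dec (fst c) a then r c else RC 0)).
Proof.
  intros Hoff Hsum Hf.
  pose proof PI_RGT_0 as Hpi.
  set (L := lsum l (fun c => if Rlt_dec (fst c) a then r c else RC 0)).
  set (Sm := fun t : R => lsum l (fun c => r c / ((a, t) - c))).
  assert (Hg : forall t,
    Cmul (Cinv (Cmul (RtoC (2 * PI)) Ci)) (Cmul (f (Cadd (RtoC a) (Cmul Ci (RtoC t)))) Ci)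
    = / RC (2 * PI) * Sm t).
  { intros t. rewrite line_point_eq, Hf. fold (Sm t). to_C. as_C_eq. field.
    split; [intro E; inversion E; lra|]. intro E; inversion E; lra. }
  split; cbv beta zeta.
  - replace (fun t => Re (Cmul (Cinv (Cmul (RtoC (2 * PI)) Ci))
        (Cmul (f (Cadd (RtoC a) (Cmul Ci (RtoC t)))) Ci)))
      with (fun t => Re (/ RC (2 * PI) * Sm t))
      by (apply functional_extensionality; intros; rewrite Hg; reflexivity).
    replace (Re L) with (2 * PI * Re (/ RC (2 * PI) * L)%C)%R.
    + apply scaled_pole_sum_improper_integral; auto.
    + destruct L as [x y]. unfold Re. simpl. field. lra.
  - replace (fun t => Im (Cmul (Cinv (Cmul (RtoC (2 * PI)) Ci))
        (Cmul (f (Cadd (RtoC a) (Cmul Ci (RtoC t)))) Ci)))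
      with (fun t => Re (- Complex.Ci / RC (2 * PI) * Sm t)).
    + replace (Im L) with (2 * PI * Re (- Complex.Ci / RC (2 * PI) * L)%C)%R.
      * apply scaled_pole_sum_improper_integral; auto.
      * destruct L as [x y]. unfold Re, Im. simpl. field. lra.
    + apply functional_extensionality. intros t. rewrite Hg.
      destruct (Sm t) as [x y]. unfold Re, Im. simpl. field. lra.
Qed.

Lemma lsum_left_of_line (a : R) (l1 l2 : list C) (f : C -> C) :
  (forall c, In c l1 -> fst c > a) -> (forall c, In c l2 -> fst c < a) ->
  lsum (l1 ++ l2) (fun c => if Rlt_dec (fst c) a then f c else RC 0) = lsum l2 f.
Proof.
  intros H1 H2. rewrite lsum_app, (lsum_ext l1 _ (fun _ => 0)), lsum_zero, Cplus_0_l.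
  - apply lsum_ext. intros c Hc. destruct (Rlt_dec (fst c) a); auto. specialize (H2 c Hc); lra.
  - intros c Hc. destruct (Rlt_dec (fst c) a); auto. specialize (H1 c Hc); lra.
Qed.

Lemma vertical_integral_rational (l : list C) (P : C -> C) (f : Cx -> Cx) (a : R) :
  NoDup l -> (2 <= length l)%nat -> is_poly (length l - 2) P ->
  (forall c, In c l -> fst c <> a) ->
  (forall t, f (a, t) = P (a, t) / lprod l (fun c => (a, t) - c)) ->
  vertical_integral f a (lsum l (fun c => if Rlt_dec (fst c) a then residue l P c else RC 0)).
Proof.
  intros Hn Hl HP Hoff Hf. apply vertical_integral_pole_sum; auto.
  - apply residues_sum_zero; auto.
  - intros t. rewrite Hf. apply partial_fractions; auto.
    + intros E. subst l. simpl in Hl. lia.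
    + apply (poly_weaken (length l - 2)); [lia|auto].
    + intros Hin. apply (Hoff _ Hin). reflexivity.
Qed.

End VerticalIntegrals.

Section IndexedProducts.
Open Scope C_scope.

Definition iprod (n : nat) (f : nat -> C) : C := Cprod1 n f.
Definition isum (n : nat) (f : nat -> C) : C := Csum1 n f.
Lemma Cprod1_iprod : Cprod1 = iprod. Proof. reflexivity. Qed.
Lemma Csum1_isum : Csum1 = isum. Proof. reflexivity. Qed.

Lemma iprod_0 f : iprod 0 f = 1. Proof. reflexivity. Qed.
Lemma isum_0 f : isum 0 f = 0. Proof. reflexivity. Qed.
Lemma iprod_S n f : iprod (S n) f = iprod n f * f (S n). Proof. reflexivity. Qed.
Lemma isum_S n f : isum (S n) f = isum n f + f (S n). Proof. reflexivity. Qed.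

Lemma iprod_ext n f g : (forall k, (1 <= k <= n)%nat -> f k = g k) -> iprod n f = iprod n g.
Proof.
  induction n as [|n IH]; intros H; [reflexivity|].
  rewrite !iprod_S, IH, H by (try lia; intros; apply H; lia). reflexivity.
Qed.
Lemma isum_ext n f g : (forall k, (1 <= k <= n)%nat -> f k = g k) -> isum n f = isum n g.
Proof.
  induction n as [|n IH]; intros H; [reflexivity|].
  rewrite !isum_S, IH, H by (try lia; intros; apply H; lia). reflexivity.
Qed.

Lemma iprod_mult n f g : iprod n (fun k => f k * g k) = iprod n f * iprod n g.
Proof. induction n as [|n IH]; [rewrite !iprod_0; ring|]. rewrite !iprod_S, IH. ring. Qed.

Lemma iprod_neq0 n (f : nat -> C) : (forall k, (1 <= k <= n)%nat -> f k <> 0) -> iprod n f <> 0.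
Proof.
  induction n as [|n IH]; intros H; [intro E; inversion E; lra|].
  rewrite iprod_S. apply Cmult_neq_0; [apply IH; intros; apply H|apply H]; lia.
Qed.

Lemma iprod_div n (f g : nat -> C) : (forall k, (1 <= k <= n)%nat -> g k <> 0) ->
  iprod n (fun k => f k / g k) = iprod n f / iprod n g.
Proof.
  induction n as [|n IH]; intros H; [rewrite !iprod_0; field; intro E; inversion E; lra|].
  rewrite !iprod_S, IH by (intros; apply H; lia). field. split.
  - apply H; lia.
  - apply iprod_neq0; intros; apply H; lia.
Qed.

Lemma iprod_one n : iprod n (fun _ => 1) = 1.
Proof. induction n as [|n IH]; [reflexivity|]. rewrite iprod_S, IH. ring. Qed.

Lemma isum_zero n : isum n (fun _ => 0) = 0.
Proof. induction n as [|n IH]; [reflexivity|]. rewrite isum_S, IH. ring. Qed.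

Lemma isum_scal n f c : isum n f * c = isum n (fun k => f k * c).
Proof. induction n as [|n IH]; [rewrite !isum_0; ring|]. rewrite !isum_S, <- IH. ring. Qed.

Lemma isum_opp n f : isum n (fun k => - f k) = - isum n f.
Proof. induction n as [|n IH]; [rewrite !isum_0; ring|]. rewrite !isum_S, IH. ring. Qed.

Lemma iprod_pick n f k : (1 <= k <= n)%nat ->
  iprod n f = f k * iprod n (fun j => if Nat.eq_dec j k then 1 else f j).
Proof.
  induction n as [|n IH]; intros Hk; [lia|].
  rewrite !iprod_S. destruct (Nat.eq_dec (S n) k) as [<-|Hne].
  - rewrite (iprod_ext n (fun j => if Nat.eq_dec j (S n) then 1 else f j) f); [ring|].
    intros j Hj. destruct (Nat.eq_dec j (S n)); auto; lia.
  - rewrite IH by lia. ring.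
Qed.

Lemma poly_iprod n (F : nat -> C -> C) : (forall k, is_poly 1 (F k)) ->
  is_poly n (fun z => iprod n (fun k => F k z)).
Proof.
  induction n as [|n IH]; intros H; [exists 1; intros; reflexivity|].
  replace (S n) with (n + 1)%nat at 1 by lia.
  apply (poly_ext (n + 1) (fun z => iprod n (fun k => F k z) * F (S n) z)); [reflexivity|].
  apply poly_mul; auto.
Qed.

Lemma poly_isum d n (F : nat -> C -> C) : (forall k, is_poly d (F k)) ->
  is_poly d (fun z => isum n (fun k => F k z)).
Proof.
  induction n as [|n IH]; intros H; [exact (poly_const d 0)|].
  apply (poly_ext d (fun z => isum n (fun k => F k z) + F (S n) z)); [reflexivity|].
  apply poly_add; auto.
Qed.

Definition nodes (n : nat) (r : nat -> C) : list C := map r (seq 0 (S n)).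

Lemma lprod_nodes n (r : nat -> C) f :
  lprod (nodes n r) f = f (r 0%nat) * iprod n (fun k => f (r k)).
Proof.
  unfold nodes. simpl map. rewrite lprod_cons. f_equal.
  induction n as [|n IH]; [reflexivity|].
  rewrite seq_S, map_app, lprod_app, IH, iprod_S. simpl map.
  rewrite lprod_cons. simpl. ring.
Qed.

Lemma nodes_NoDup n (r : nat -> C) :
  (forall k l, (k <= n)%nat -> (l <= n)%nat -> r k = r l -> k = l) -> NoDup (nodes n r).
Proof.
  intros H. apply NoDup_map_NoDup_ForallPairs; [|apply seq_NoDup].
  intros k l Hk Hl E. apply in_seq in Hk, Hl. apply H; auto; lia.
Qed.

Lemma in_nodes n (r : nat -> C) z : In z (nodes n r) -> exists k, (k <= n)%nat /\ z = r k.
Proof.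
  intros H. apply in_map_iff in H. destruct H as [k [<- Hk]]. apply in_seq in Hk.
  exists k; split; auto; lia.
Qed.

Lemma nodes_in n (r : nat -> C) k : (k <= n)%nat -> In (r k) (nodes n r).
Proof. intros Hk. apply in_map, in_seq. lia. Qed.

Lemma length_nodes n r : length (nodes n r) = S n.
Proof. unfold nodes. rewrite length_map, length_seq. reflexivity. Qed.

End IndexedProducts.

Section RationalForms.
Open Scope C_scope.

Lemma Ci_mul_m (z : C) : Defs.Cmul Defs.Ci (Defs.Cmul (Defs.Copp Defs.Ci) z) = z.
Proof. apply C_ext; destruct z; simpl; ring. Qed.
Lemma Ci_sq_m (z : C) :
  Defs.Cmul (Defs.Cmul (Defs.Copp Defs.Ci) z) (Defs.Cmul (Defs.Copp Defs.Ci) z) = - (z * z).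
Proof. apply C_ext; destruct z; simpl; ring. Qed.

Definition psi_rational (X : MEproc) (z : C) : C :=
  RC (sigma X ^ 2 / 2) * z * z + RC (eta X) * z +
  (RC (pp X) * isum (mplus X) (fun k => RC (aplus X k) * (z / (RC (alplus X k) - z))) -
   RC (1 - pp X) * isum (mminus X) (fun j => RC (aminus X j) * (z / (RC (alminus X j) + z)))).

Lemma psiC_rational X z : psiC X z = psi_rational X z.
Proof.
  unfold psiC, Psi. cbv zeta. rewrite Ci_mul_m, Ci_sq_m. to_C. rewrite Csum1_isum.
  unfold psi_rational. f_equal. f_equal. apply C_ext; destruct z as [u v]; simpl; field.
Qed.

Lemma psiC_0 X : (forall k, (1 <= k <= mplus X)%nat -> alplus X k > 0) ->
  (forall k, (1 <= k <= mminus X)%nat -> alminus X k > 0) -> psiC X (RC 0) = RC 0.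
Proof.
  intros Ha Hb. rewrite psiC_rational. unfold psi_rational.
  rewrite (isum_ext _ _ (fun _ => 0)), (isum_ext (mminus X) _ (fun _ => 0)), !isum_zero; [as_C_eq; ring| |].
  - intros k Hk. assert (H := RC_pos_neq0 _ (Hb k Hk)).
    replace (RC (alminus X k) + RC 0) with (RC (alminus X k)) by ring. field. auto.
  - intros k Hk. assert (H := RC_pos_neq0 _ (Ha k Hk)).
    replace (RC (alplus X k) - RC 0) with (RC (alplus X k)) by ring. field. auto.
Qed.

Lemma real_root X (x lam : R) : psi_dom X x -> psi X x = (- lam)%R ->
  is_root X (Defs.RtoC (- lam)%R) (Defs.RtoC x).
Proof.
  intros [Ha Hb] Hpsi.
  assert (Hsnd0 : forall n (f : nat -> C), (forall k, (1 <= k <= n)%nat -> snd (f k) = 0%R) ->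
    snd (isum n f) = 0%R).
  { induction n as [|n IH]; intros f H; [reflexivity|].
    rewrite isum_S. simpl. rewrite (H (S n)), IH by (try lia; intros; apply H; lia). ring. }
  split.
  - split; intros k Hk E; inversion E; [specialize (Ha k Hk)|specialize (Hb k Hk)]; lra.
  - apply C_ext; [exact Hpsi|].
    change (snd (psiC X (Defs.RtoC x)) = 0%R). rewrite psiC_rational. unfold psi_rational.
    unfold Cminus, Cplus, Cmult, Complex.Copp, Complex.RtoC; cbn [fst snd].
    rewrite (Hsnd0 (mplus X)), (Hsnd0 (mminus X)); [unfold Defs.RtoC; simpl; ring| |].
    + intros k Hk. specialize (Hb k Hk). simpl. field.
      intro E. assert (E' : (alminus X k + x)%R = 0%R) by nra. lra.
    + intros k Hk. specialize (Ha k Hk). simpl. field.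
      intro E. assert (E' : (alplus X k + - x)%R = 0%R) by nra. lra.
Qed.

Definition psi_denom (X : MEproc) (z : C) : C :=
  iprod (mplus X) (fun k => z - RC (alplus X k)) * iprod (mminus X) (fun j => z + RC (alminus X j)).
Definition psi_denom_but_plus (X : MEproc) (k : nat) (z : C) : C :=
  iprod (mplus X) (fun k' => if Nat.eq_dec k' k then 1 else z - RC (alplus X k')) *
  iprod (mminus X) (fun j => z + RC (alminus X j)).
Definition psi_denom_but_minus (X : MEproc) (j : nat) (z : C) : C :=
  iprod (mplus X) (fun k => z - RC (alplus X k)) *
  iprod (mminus X) (fun j' => if Nat.eq_dec j' j then 1 else z + RC (alminus X j')).

(* The polynomial (c - psi z) psi_denom z. *)
Definition psi_numer (X : MEproc) (c : R) (z : C) : C :=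
  (RC c - RC (sigma X ^ 2 / 2) * z * z - RC (eta X) * z) * psi_denom X z
  + RC (pp X) * isum (mplus X) (fun k => RC (aplus X k) * z * psi_denom_but_plus X k z)
  + RC (1 - pp X) * isum (mminus X) (fun j => RC (aminus X j) * z * psi_denom_but_minus X j z).

Lemma psi_numer_eq X c z : not_pole X z -> psi_numer X c z = (RC c - psiC X z) * psi_denom X z.
Proof.
  intros [H1 H2]. rewrite psiC_rational. unfold psi_numer, psi_rational.
  assert (Ep : isum (mplus X) (fun k => RC (aplus X k) * (z / (RC (alplus X k) - z))) * psi_denom X z
          = - isum (mplus X) (fun k => RC (aplus X k) * z * psi_denom_but_plus X k z)).
  { rewrite isum_scal, <- isum_opp. apply isum_ext. intros k Hk.
    unfold psi_denom, psi_denom_but_plus. rewrite (iprod_pick (mplus X) _ k Hk).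
    assert (RC (alplus X k) - z <> 0) by (apply Csub_neq0; intros <-; apply (H1 k Hk); reflexivity).
    field. auto. }
  assert (Em : isum (mminus X) (fun j => RC (aminus X j) * (z / (RC (alminus X j) + z))) * psi_denom X z
          = isum (mminus X) (fun j => RC (aminus X j) * z * psi_denom_but_minus X j z)).
  { rewrite isum_scal. apply isum_ext. intros j Hj.
    unfold psi_denom, psi_denom_but_minus.
    rewrite (iprod_pick (mminus X) (fun j => z + RC (alminus X j)) j Hj).
    assert (RC (alminus X j) + z <> 0).
    { intro E. apply (H2 j Hj). replace z with (RC (alminus X j) + z - RC (alminus X j)) by ring.
      rewrite E. apply C_ext; simpl; ring. }
    field. auto. }
  transitivity ((RC c - RC (sigma X ^ 2 / 2) * z * z - RC (eta X) * z) * psi_denom X z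
    - RC (pp X) * (isum (mplus X) (fun k => RC (aplus X k) * (z / (RC (alplus X k) - z))) * psi_denom X z)
    + RC (1 - pp X) * (isum (mminus X) (fun j => RC (aminus X j) * (z / (RC (alminus X j) + z))) * psi_denom X z)).
  - rewrite Ep, Em. ring.
  - ring.
Qed.

Lemma poly_add_const (w : C) : is_poly 1 (fun z => z + w).
Proof. apply (poly_ext 1 (fun z => 1 * z + w)); [intros; ring|apply poly_affine]. Qed.
Lemma poly_sub_const (w : C) : is_poly 1 (fun z => z - w).
Proof. apply (poly_ext 1 (fun z => 1 * z + - w)); [intros; ring|apply poly_affine]. Qed.

Lemma psi_denom_poly X : is_poly (mplus X + mminus X) (psi_denom X).
Proof.
  apply poly_mul; apply poly_iprod; intros k; [apply poly_sub_const|apply poly_add_const].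
Qed.

Lemma psi_numer_poly X c : is_poly (mplus X + mminus X + 2) (psi_numer X c).
Proof.
  assert (Hplus : forall k, is_poly (mplus X + mminus X) (psi_denom_but_plus X k)).
  { intros k0. apply poly_mul; apply poly_iprod; intros k; [|apply poly_add_const].
    destruct (Nat.eq_dec k k0); [apply poly_const|apply poly_sub_const]. }
  assert (Hminus : forall j, is_poly (mplus X + mminus X) (psi_denom_but_minus X j)).
  { intros j0. apply poly_mul; apply poly_iprod; intros j; [apply poly_sub_const|].
    destruct (Nat.eq_dec j j0); [apply poly_const|apply poly_add_const]. }
  assert (Hquad : is_poly 2 (fun z => RC c - RC (sigma X ^ 2 / 2) * z * z - RC (eta X) * z)).
  { exists (RC c), (fun z => - RC (eta X) + z * - RC (sigma X ^ 2 / 2)). split.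
    - exists (- RC (eta X)), (fun _ => - RC (sigma X ^ 2 / 2)). split; [apply poly_const|auto].
    - intros; ring. }
  unfold psi_numer. apply poly_add; [apply poly_add|].
  - replace (mplus X + mminus X + 2)%nat with (2 + (mplus X + mminus X))%nat by lia.
    apply poly_mul; [exact Hquad|apply psi_denom_poly].
  - apply poly_scal, poly_isum. intros k.
    apply (poly_ext _ (fun z => RC (aplus X k) * (z * psi_denom_but_plus X k z))); [intros; ring|].
    apply poly_scal, (poly_weaken (S (mplus X + mminus X))); [lia|]. apply poly_mulX; auto.
  - apply poly_scal, poly_isum. intros j.
    apply (poly_ext _ (fun z => RC (aminus X j) * (z * psi_denom_but_minus X j z))); [intros; ring|].
    apply poly_scal, (poly_weaken (S (mplus X + mminus X))); [lia|]. apply poly_mulX; auto.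
Qed.

End RationalForms.

Section WienerHopfFactors.
Open Scope C_scope.

(* Each factor (1 - u/w)/(1 - u/r) equals (r/w) (u - w)/(u - r). *)
Lemma iprod_ratio n (r w : nat -> C) u :
  (forall k, (1 <= k <= n)%nat -> r k <> 0 /\ w k <> 0 /\ u <> r k) ->
  iprod n (fun k => (1 - u / w k) / (1 - u / r k))
  = iprod n (fun k => r k / w k) * (iprod n (fun k => u - w k) / iprod n (fun k => u - r k)).
Proof.
  intros H.
  rewrite (iprod_ext n _ (fun k => r k / w k * ((u - w k) / (u - r k)))).
  - rewrite iprod_mult, (iprod_div n (fun k => u - w k) (fun k => u - r k)); [reflexivity|].
    intros k Hk. destruct (H k Hk) as [_ [_ Hu]]. apply Csub_neq0; auto.
  - intros k Hk. destruct (H k Hk) as [Hr [Hw Hu]].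
    assert (u - r k <> 0) by (apply Csub_neq0; auto).
    assert (1 - u / r k <> 0).
    { intro E. apply Hu. replace u with (r k * (1 - (1 - u / r k))) by (field; auto).
      rewrite E. ring. }
    field. repeat split; auto. apply Csub_neq0; auto.
Qed.

Definition plus_const (X : MEproc) (r : nat -> C) : C :=
  - r 0%nat * iprod (mplus X) (fun k => r k / RC (alplus X k)).
Definition minus_const (X : MEproc) (r : nat -> C) : C :=
  - r 0%nat * iprod (mminus X) (fun k => r k / - RC (alminus X k)).
Definition mu_const (X : MEproc) (phib : R) (r : nat -> C) : C :=
  RC phib * r 0%nat * iprod (mplus X) (fun k => r k / RC (alplus X k)).

Lemma Psi_plus_rational X (r : nat -> C) (u : C) :
  (forall k, (k <= mplus X)%nat -> r k <> 0) ->
  (forall k, (1 <= k <= mplus X)%nat -> alplus X k > 0) ->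
  ~ In u (nodes (mplus X) r) ->
  Psi_plus X r (Defs.Cmul (Defs.Copp Defs.Ci) u)
  = plus_const X r * iprod (mplus X) (fun k => u - RC (alplus X k))
    / lprod (nodes (mplus X) r) (fun c => u - c).
Proof.
  intros Hr Ha Hu. unfold Psi_plus. cbv zeta. rewrite Ci_mul_m. to_C.
  rewrite Cprod1_iprod, iprod_ratio, lprod_nodes.
  - assert (H0 := Hr 0%nat ltac:(lia)).
    assert (Hu0 : u - r 0%nat <> 0) by (apply Csub_neq0; intros ->; apply Hu, nodes_in; lia).
    assert (iprod (mplus X) (fun k => u - r k) <> 0).
    { apply iprod_neq0. intros k Hk. apply Csub_neq0. intros ->. apply Hu, nodes_in; lia. }
    unfold plus_const. as_C_eq. field. repeat split; auto.
    apply Csub_neq0. intros E. apply Hu0. rewrite <- E at 1. field. auto.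
  - intros k Hk. repeat split; [apply Hr; lia|apply RC_pos_neq0, Ha; auto|].
    intros ->. apply Hu, nodes_in; lia.
Qed.

Lemma Psi_minus_rational X (r : nat -> C) (u : C) :
  (forall k, (k <= mminus X)%nat -> r k <> 0) ->
  (forall k, (1 <= k <= mminus X)%nat -> alminus X k > 0) ->
  ~ In u (nodes (mminus X) r) ->
  Psi_minus X r (Defs.Cmul (Defs.Copp Defs.Ci) u)
  = minus_const X r * iprod (mminus X) (fun k => u + RC (alminus X k))
    / lprod (nodes (mminus X) r) (fun c => u - c).
Proof.
  intros Hr Ha Hu. unfold Psi_minus. cbv zeta. rewrite Ci_mul_m. to_C.
  assert (Hneq : forall k, (1 <= k <= mminus X)%nat -> RC (alminus X k) <> 0)
    by (intros; apply RC_pos_neq0, Ha; auto).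
  rewrite Cprod1_iprod, (iprod_ext _ _ (fun k => (1 - u / - RC (alminus X k)) / (1 - u / r k)))
    by (intros k Hk; specialize (Hneq k Hk); f_equal; field; auto).
  rewrite iprod_ratio, lprod_nodes.
  - rewrite (iprod_ext _ (fun k => u - - RC (alminus X k)) (fun k => u + RC (alminus X k)))
      by (intros; ring).
    assert (H0 := Hr 0%nat ltac:(lia)).
    assert (Hu0 : u - r 0%nat <> 0) by (apply Csub_neq0; intros ->; apply Hu, nodes_in; lia).
    assert (iprod (mminus X) (fun k => u - r k) <> 0).
    { apply iprod_neq0. intros k Hk. apply Csub_neq0. intros ->. apply Hu, nodes_in; lia. }
    unfold minus_const. as_C_eq. field. repeat split; auto.
    apply Csub_neq0. intros E. apply Hu0. rewrite <- E at 1. field. auto.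
  - intros k Hk. repeat split; [apply Hr; lia| |].
    + intro E. apply (Hneq k Hk). replace (RC (alminus X k)) with (- - RC (alminus X k)) by ring.
      rewrite E. ring.
    + intros ->. apply Hu, nodes_in; lia.
Qed.

Lemma mu_hat_rational X (phib : R) (r : nat -> C) (u : C) :
  phib > 0 -> u <> RC phib ->
  (forall k, (k <= mplus X)%nat -> r k <> 0) ->
  (forall k, (1 <= k <= mplus X)%nat -> alplus X k > 0) ->
  ~ In u (nodes (mplus X) r) ->
  mu_hat X phib r (Defs.Copp u)
  = mu_const X phib r * iprod (mplus X) (fun k => u - RC (alplus X k))
    / ((u - RC phib) * lprod (nodes (mplus X) r) (fun c => u - c)).
Proof.
  intros Hp Hup Hr Ha Hu. unfold mu_hat. to_C.
  assert (Hneq : forall k, (1 <= k <= mplus X)%nat -> RC (alplus X k) <> 0)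
    by (intros; apply RC_pos_neq0, Ha; auto).
  rewrite Cprod1_iprod, (iprod_ext _ _ (fun k => (1 - u / RC (alplus X k)) / (1 - u / r k)))
    by (intros k Hk; f_equal; unfold Complex.Cdiv; ring).
  rewrite iprod_ratio, lprod_nodes.
  - assert (H0 := Hr 0%nat ltac:(lia)).
    assert (Hu0 : u - r 0%nat <> 0) by (apply Csub_neq0; intros ->; apply Hu, nodes_in; lia).
    assert (iprod (mplus X) (fun k => u - r k) <> 0).
    { apply iprod_neq0. intros k Hk. apply Csub_neq0. intros ->. apply Hu, nodes_in; lia. }
    assert (u - RC phib <> 0) by (apply Csub_neq0; auto).
    assert (RC phib <> 0) by (apply RC_pos_neq0; auto).
    unfold mu_const. as_C_eq. field. repeat split; auto.
    + apply Csub_neq0. intros E. apply Hu0. rewrite <- E at 1. ring.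
    + apply Csub_neq0. intros E. apply Hup. rewrite <- E at 1. ring.
  - intros k Hk. repeat split; [apply Hr; lia|apply Hneq; auto|].
    intros ->. apply Hu, nodes_in; lia.
Qed.

Lemma Psi_plus_at_0 X (r : nat -> C) : (forall k, (k <= mplus X)%nat -> r k <> 0) ->
  (forall k, (1 <= k <= mplus X)%nat -> alplus X k > 0) ->
  Psi_plus X r (Defs.Cmul (Defs.Copp Defs.Ci) (RC 0)) = RC 1.
Proof.
  intros Hr Ha. unfold Psi_plus. cbv zeta. rewrite Ci_mul_m. to_C.
  rewrite Cprod1_iprod, (iprod_ext _ _ (fun _ => 1)), iprod_one.
  - assert (H0 := Hr 0%nat ltac:(lia)). as_C_eq. field.
    replace (r 0%nat - RC 0) with (r 0%nat) by ring. auto.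
  - intros k Hk. assert (H1 := Hr k ltac:(lia)). assert (H2 := RC_pos_neq0 _ (Ha k Hk)).
    field. auto.
Qed.

Lemma Psi_minus_at_0 X (r : nat -> C) : (forall k, (k <= mminus X)%nat -> r k <> 0) ->
  (forall k, (1 <= k <= mminus X)%nat -> alminus X k > 0) ->
  Psi_minus X r (Defs.Cmul (Defs.Copp Defs.Ci) (RC 0)) = RC 1.
Proof.
  intros Hr Ha. unfold Psi_minus. cbv zeta. rewrite Ci_mul_m. to_C.
  rewrite Cprod1_iprod, (iprod_ext _ _ (fun _ => 1)), iprod_one.
  - assert (H0 := Hr 0%nat ltac:(lia)). as_C_eq. field.
    replace (r 0%nat - RC 0) with (r 0%nat) by ring. auto.
  - intros k Hk. assert (H1 := Hr k ltac:(lia)). assert (H2 := RC_pos_neq0 _ (Ha k Hk)).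
    field. auto.
Qed.

End WienerHopfFactors.

Section WienerHopfFactorization.
Open Scope C_scope.

Lemma Psi_product_rational X (rp rm : nat -> C) (v : C) :
  (forall k, (k <= mplus X)%nat -> rp k <> 0) ->
  (forall k, (k <= mminus X)%nat -> rm k <> 0) ->
  (forall k, (1 <= k <= mplus X)%nat -> alplus X k > 0) ->
  (forall k, (1 <= k <= mminus X)%nat -> alminus X k > 0) ->
  ~ In v (nodes (mplus X) rp ++ nodes (mminus X) rm) ->
  Psi_plus X rp (Defs.Cmul (Defs.Copp Defs.Ci) v) * Psi_minus X rm (Defs.Cmul (Defs.Copp Defs.Ci) v)
  = plus_const X rp * minus_const X rm * psi_denom X v
    / lprod (nodes (mplus X) rp ++ nodes (mminus X) rm) (fun c => v - c).
Proof.
  intros Hrp Hrm Ha Hb Hv.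
  rewrite Psi_plus_rational, Psi_minus_rational, lprod_app by (auto; intro; apply Hv, in_or_app; auto).
  assert (lprod (nodes (mplus X) rp) (fun c => v - c) <> 0)
    by (apply lprod_sub_neq0; intro; apply Hv, in_or_app; auto).
  assert (lprod (nodes (mminus X) rm) (fun c => v - c) <> 0)
    by (apply lprod_sub_neq0; intro; apply Hv, in_or_app; auto).
  unfold psi_denom. as_C_eq. field. auto.
Qed.

Section Roots.
Variables (X : MEproc) (q : R) (rqp rqm : nat -> C).
Hypothesis X_valid : ME_valid X.
Hypothesis q_pos : q > 0.
Hypothesis rqp_enum : root_enum X (Defs.RtoC q) (fun z => Re z > 0) (mplus X) rqp.
Hypothesis rqm_enum : root_enum X (Defs.RtoC q) (fun z => Re z < 0) (mminus X) rqm.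

Definition q_roots : list C := nodes (mplus X) rqp ++ nodes (mminus X) rqm.

Lemma q_roots_spec c : In c q_roots -> is_root X (Defs.RtoC q) c /\ fst c <> 0%R.
Proof.
  destruct rqp_enum as [Hp _], rqm_enum as [Hm _].
  intros Hc. apply in_app_or in Hc.
  destruct Hc as [Hc|Hc]; apply in_nodes in Hc; destruct Hc as [k [Hk ->]].
  - destruct (Hp k Hk) as [Hr Hre]. split; auto. unfold Re in Hre. lra.
  - destruct (Hm k Hk) as [Hr Hre]. split; auto. unfold Re in Hre. lra.
Qed.

Lemma q_roots_NoDup : NoDup q_roots.
Proof.
  destruct rqp_enum as [Hp [Hp2 _]], rqm_enum as [Hm [Hm2 _]].
  apply NoDup_app; [apply nodes_NoDup; auto|apply nodes_NoDup; auto|].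
  intros z Hz1 Hz2. apply in_nodes in Hz1, Hz2.
  destruct Hz1 as [k1 [Hk1 ->]], Hz2 as [k2 [Hk2 E]].
  destruct (Hp k1 Hk1) as [_ H1], (Hm k2 Hk2) as [_ H2]. rewrite E in H1. lra.
Qed.

Lemma q_roots_nonzero_plus k : (k <= mplus X)%nat -> rqp k <> 0.
Proof.
  intros Hk E. apply (q_roots_spec (rqp k)); [|rewrite E; reflexivity].
  apply in_or_app; left; apply nodes_in; auto.
Qed.

Lemma q_roots_nonzero_minus k : (k <= mminus X)%nat -> rqm k <> 0.
Proof.
  intros Hk E. apply (q_roots_spec (rqm k)); [|rewrite E; reflexivity].
  apply in_or_app; right; apply nodes_in; auto.
Qed.

Lemma psi_numer_factor : exists K, forall z, psi_numer X q z = K * lprod q_roots (fun c => z - c).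
Proof.
  apply (poly_roots_prod q_roots _ _ (psi_numer_poly X q) q_roots_NoDup).
  - unfold q_roots. rewrite length_app, !length_nodes. lia.
  - intros r Hr. destruct (q_roots_spec r Hr) as [[Hnp Hps] _].
    rewrite psi_numer_eq, Hps by auto. to_C. ring.
Qed.

Lemma Psi_product_symbol : exists K, forall v, not_pole X v -> psiC X v <> Defs.RtoC q ->
  Psi_plus X rqp (Defs.Cmul (Defs.Copp Defs.Ci) v) * Psi_minus X rqm (Defs.Cmul (Defs.Copp Defs.Ci) v)
  * (RC q - psiC X v) = K.
Proof.
  destruct X_valid as [_ [_ [Ha [Hb _]]]].
  destruct psi_numer_factor as [K HK].
  exists (plus_const X rqp * minus_const X rqm * K). intros v Hnp Hq.
  assert (Hv : ~ In v q_roots) by (intros Hin; apply Hq, (q_roots_spec v Hin)).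
  rewrite Psi_product_rational by (auto using q_roots_nonzero_plus, q_roots_nonzero_minus).
  fold q_roots.
  assert (E := psi_numer_eq X q v Hnp). rewrite HK in E.
  assert (RC q - psiC X v <> 0) by (apply Csub_neq0; auto).
  assert (lprod q_roots (fun c => v - c) <> 0) by (apply lprod_sub_neq0; auto).
  replace (psi_denom X v) with (K * lprod q_roots (fun c => v - c) / (RC q - psiC X v))
    by (rewrite E; field; auto).
  field. auto.
Qed.

Theorem wiener_hopf_factorization v : not_pole X v -> psiC X v <> Defs.RtoC q ->
  Psi_plus X rqp (Defs.Cmul (Defs.Copp Defs.Ci) v) * Psi_minus X rqm (Defs.Cmul (Defs.Copp Defs.Ci) v)
  = RC q / (RC q - psiC X v).
Proof.
  intros Hnp Hq. destruct Psi_product_symbol as [K HK].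
  pose proof X_valid as [_ [_ [Ha [Hb _]]]].
  assert (Hnp0 : not_pole X (RC 0)).
  { split; intros k Hk E; inversion E; [specialize (Ha k Hk)|specialize (Hb k Hk)]; lra. }
  assert (H0 := HK (RC 0) Hnp0).
  rewrite psiC_0, Psi_plus_at_0, Psi_minus_at_0 in H0
    by (auto using q_roots_nonzero_plus, q_roots_nonzero_minus).
  specialize (H0 ltac:(intro E; inversion E; lra)).
  assert (HKq : K = RC q) by (rewrite <- H0; to_C; ring).
  assert (RC q - psiC X v <> 0) by (apply Csub_neq0; auto).
  specialize (HK v Hnp Hq). rewrite HKq in HK. rewrite <- HK at 1. field. auto.
Qed.

End Roots.
End WienerHopfFactorization.

Section ResidueComputation.
Open Scope C_scope.

Variables (X : MEproc) (phib q lam th : R) (rqp rqm rlp : nat -> C).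
Hypothesis X_valid : ME_valid X.
Hypothesis q_pos : q > 0.
Hypothesis th_pos : th > 0.
Hypothesis lam_pos : 0 < lam.
Hypothesis phib_pos : phib > 0.
Hypothesis phib_dom : psi_dom X phib.
Hypothesis phib_root : psi X phib = (- lam)%R.
Hypothesis rqp_enum : root_enum X (Defs.RtoC q) (fun z => Re z > 0) (mplus X) rqp.
Hypothesis rqm_enum : root_enum X (Defs.RtoC q) (fun z => Re z < 0) (mminus X) rqm.
Hypothesis rlp_enum : root_enum X (Defs.RtoC (- lam)) (fun z => Re z > phib) (mplus X) rlp.

(* Poles of the integrand right of the line: phibar(-lam) and rho^+_k(-lam),
   all roots of psi = -lam; left of it: -theta and rho^-_j(q). *)
Definition right_poles : list C := RC phib :: nodes (mplus X) rlp.
Definition left_poles : list C := RC (- th) :: nodes (mminus X) rqm.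
Definition poles : list C := right_poles ++ left_poles.
Hypothesis poles_NoDup : NoDup poles.

Definition Psi_plus_theta : C := Psi_plus X rqp (Defs.Cmul Defs.Ci (Defs.RtoC th)).

Definition integrand_numer (u : C) : C :=
  Psi_plus_theta * mu_const X phib rlp * minus_const X rqm * psi_denom X u.

Lemma right_poles_re c : In c right_poles -> fst c > phib \/ c = RC phib.
Proof.
  intros [<-|Hc]; [right; reflexivity|left].
  apply in_nodes in Hc. destruct Hc as [k [Hk ->]]. apply (proj1 rlp_enum k Hk).
Qed.

Lemma left_poles_re c : In c left_poles -> fst c < 0.
Proof.
  intros [<-|Hc]; [simpl; lra|].
  apply in_nodes in Hc. destruct Hc as [k [Hk ->]]. apply (proj1 rqm_enum k Hk).
Qed.

Lemma right_poles_roots c : In c right_poles -> is_root X (Defs.RtoC (- lam)) c.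
Proof.
  intros [<-|Hc]; [apply real_root; auto|].
  apply in_nodes in Hc. destruct Hc as [k [Hk ->]]. apply (proj1 rlp_enum k Hk).
Qed.

Lemma rlp_nonzero k : (k <= mplus X)%nat -> rlp k <> 0.
Proof.
  intros Hk. apply C_neq0_fst. pose proof (proj2 (proj1 rlp_enum k Hk)) as H.
  unfold Re in H. lra.
Qed.

Lemma rqm_nonzero k : (k <= mminus X)%nat -> rqm k <> 0.
Proof.
  intros Hk. apply C_neq0_fst. pose proof (proj2 (proj1 rqm_enum k Hk)) as H.
  unfold Re in H. lra.
Qed.

Lemma integrand_rational (u : C) : (0 < fst u < phib)%R ->
  Cdiv (Cmul (Cmul Psi_plus_theta (mu_hat X phib rlp (Copp u))) (Psi_minus X rqm (Cmul (Copp Ci) u)))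
       (Cadd u (RtoC th))
  = integrand_numer u / lprod poles (fun c => u - c).
Proof.
  intros Hu. pose proof X_valid as [_ [_ [Ha [Hb _]]]].
  assert (Hr : ~ In u right_poles).
  { intros Hc. destruct (right_poles_re u Hc) as [H| ->]; simpl in Hu; lra. }
  assert (Hl : ~ In u left_poles) by (intros Hc; pose proof (left_poles_re u Hc); lra).
  rewrite mu_hat_rational, Psi_minus_rational; auto using rlp_nonzero, rqm_nonzero.
  2: intro; apply Hl; right; auto.
  2: intros E; apply Hr; left; auto.
  2: intro; apply Hr; right; auto.
  unfold poles, right_poles, left_poles, integrand_numer, psi_denom.
  rewrite lprod_app, !lprod_cons. to_C. rewrite RtoC_opp.
  assert (lprod (nodes (mplus X) rlp) (fun z => u - z) <> 0)
    by (apply lprod_sub_neq0; intro; apply Hr; right; auto).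
  assert (lprod (nodes (mminus X) rqm) (fun z => u - z) <> 0)
    by (apply lprod_sub_neq0; intro; apply Hl; right; auto).
  assert (u - RC phib <> 0) by (apply Csub_neq0; intros E; apply Hr; left; auto).
  assert (u + RC th <> 0) by (apply C_neq0_fst; simpl; lra).
  assert (u - - RC th <> 0) by (apply C_neq0_fst; simpl; lra).
  as_C_eq. field. repeat split; auto.
Qed.

Lemma rqp_nonzero k : (k <= mplus X)%nat -> rqp k <> 0.
Proof. exact (q_roots_nonzero_plus X q rqp rqm rqp_enum rqm_enum k). Qed.

Lemma plus_const_neq0 : plus_const X rqp <> 0.
Proof.
  pose proof X_valid as [_ [_ [Ha _]]]. pose proof rqp_nonzero as H0.
  unfold plus_const. apply Cmult_neq_0.
  - intro E. apply (H0 0%nat); [lia|]. replace (rqp 0%nat) with (- - rqp 0%nat) by ring.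
    rewrite E. ring.
  - apply iprod_neq0. intros k Hk E. apply (H0 k); [lia|].
    assert (H2 := RC_pos_neq0 _ (Ha k Hk)).
    replace (rqp k) with (rqp k / RC (alplus X k) * RC (alplus X k)) by (field; auto).
    rewrite E. ring.
Qed.

(* Dividing the integrand by Psi^+(q, -i u) Psi^-(q, -i u) leaves
   Psi^+(q, i theta) mu_hat(-u) / (Psi^+(q, -i u) (u + theta)), which is
   [reduced_numer u / prod_{c in reduced_poles} (u - c)]. *)
Definition reduced_poles : list C := right_poles ++ RC (- th) :: nil.
Definition reduced_numer (u : C) : C :=
  Psi_plus_theta * mu_const X phib rlp / plus_const X rqp * lprod (nodes (mplus X) rqp) (fun c => u - c).

(* At a right pole c, psi(c) = -lam, so Psi^+ Psi^- = q / (q + lam) there. *)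
Lemma right_pole_residue c : In c right_poles ->
  residue poles integrand_numer c = RC (q / (q + lam)) * residue reduced_poles reduced_numer c.
Proof.
  intros Hc. pose proof X_valid as [_ [_ [Ha [Hb _]]]].
  destruct (right_poles_roots c Hc) as [Hnp Hpsi].
  assert (Hcre : fst c > 0) by (destruct (right_poles_re c Hc) as [H| ->]; simpl; lra).
  assert (Hq : psiC X c <> Defs.RtoC q) by (rewrite Hpsi; intro E; inversion E; lra).
  assert (Hnotq : ~ In c (q_roots X rqp rqm))
    by (intros Hin; apply Hq, (q_roots_spec X q rqp rqm rqp_enum rqm_enum c Hin)).
  assert (HWH := wiener_hopf_factorization X q rqp rqm X_valid q_pos rqp_enum rqm_enum c Hnp Hq).
  rewrite Psi_product_rational in HWH
    by (auto using rqp_nonzero, rqm_nonzero).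
  rewrite Hpsi, lprod_app in HWH.
  assert (HcL : ~ In c left_poles) by (intro H; pose proof (left_poles_re c H); lra).
  assert (Hcth : c - RC (- th) <> 0) by (apply Csub_neq0_fst; simpl; lra).
  assert (lprod (nodes (mplus X) rqp) (fun z => c - z) <> 0)
    by (apply lprod_sub_neq0; intro; apply Hnotq, in_or_app; auto).
  assert (lprod (nodes (mminus X) rqm) (fun z => c - z) <> 0)
    by (apply lprod_sub_neq0; intro; apply Hnotq, in_or_app; auto).
  assert (HPi := nodal_deriv_neq0 right_poles c).
  assert (Hplus := plus_const_neq0).
  assert (RC q + RC lam <> 0) by (apply C_neq0_fst; simpl; lra).
  set (Pq := lprod (nodes (mplus X) rqp) (fun z => c - z) * lprod (nodes (mminus X) rqm) (fun z => c - z)).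
  assert (Pq <> 0) by (apply Cmult_neq_0; auto).
  assert (Hmd : minus_const X rqm * psi_denom X c = RC (q / (q + lam)) / plus_const X rqp * Pq).
  { transitivity (plus_const X rqp * minus_const X rqm * psi_denom X c / Pq * Pq / plus_const X rqp).
    - field. auto.
    - fold Pq in HWH. rewrite HWH. to_C. rewrite RtoC_opp, RtoC_div, RtoC_plus by lra.
      field. auto. }
  unfold residue, poles, reduced_poles.
  rewrite !nodal_deriv_app, (nodal_deriv_notin left_poles c HcL),
    (nodal_deriv_notin (RC (- th) :: nil) c) by (intros [E|[]]; apply HcL; left; auto).
  unfold left_poles.
  rewrite (lprod_cons (RC (- th)) (nodes (mminus X) rqm)), (lprod_cons (RC (- th)) nil).
  replace (integrand_numer c) with (Psi_plus_theta * mu_const X phib rlp * (minus_const X rqm * psi_denom X c))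
    by (unfold integrand_numer; ring).
  rewrite Hmd. unfold reduced_numer, Pq.
  change (lprod nil (fun z => c - z)) with (RC 1).
  field. repeat split; auto.
Qed.

Lemma theta_residue : residue reduced_poles reduced_numer (RC (- th)) = mu_hat X phib rlp (RtoC th).
Proof.
  pose proof X_valid as [_ [_ [Ha _]]].
  set (x := RC (- th)).
  assert (HxR : ~ In x right_poles).
  { intros H. destruct (right_poles_re x H) as [H'|E]; [simpl in H'; lra|inversion E; lra]. }
  assert (Hxp : ~ In x (nodes (mplus X) rqp)).
  { intros H. apply in_nodes in H. destruct H as [k [Hk E]].
    pose proof (proj2 (proj1 rqp_enum k Hk)) as Hre. rewrite <- E in Hre. unfold Re in Hre.
    simpl in Hre. lra. }
  assert (Eth : RtoC th = Defs.Copp x) by (apply C_ext; simpl; ring).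
  assert (Eci : Cmul Ci (RtoC th) = Cmul (Defs.Copp Ci) x) by (apply C_ext; simpl; ring).
  unfold residue, reduced_poles.
  rewrite nodal_deriv_app, (nodal_deriv_notin right_poles x HxR).
  rewrite nodal_deriv_single.
  rewrite Eth, mu_hat_rational by (auto using rlp_nonzero; try (intros E; inversion E; lra);
                                   intro; apply HxR; right; auto).
  unfold reduced_numer, Psi_plus_theta. rewrite Eci, Psi_plus_rational by auto using rqp_nonzero.
  unfold right_poles. rewrite lprod_cons.
  assert (HPl : lprod (nodes (mplus X) rlp) (fun z => x - z) <> 0)
    by (apply lprod_sub_neq0; intro; apply HxR; right; auto).
  assert (HPp : lprod (nodes (mplus X) rqp) (fun z => x - z) <> 0) by (apply lprod_sub_neq0; auto).
  assert (x - RC phib <> 0) by (apply Csub_neq0; intro; apply HxR; left; auto).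
  assert (Hplus := plus_const_neq0).
  field. repeat split; auto.
Qed.

Lemma minus_theta_not_right : ~ In (RC (- th)) right_poles.
Proof.
  intros H. destruct (right_poles_re _ H) as [H'|E]; [simpl in H'; lra|inversion E; lra].
Qed.

Lemma poles_length : length poles = (mplus X + mminus X + 4)%nat.
Proof.
  unfold poles, right_poles, left_poles. rewrite length_app. cbn [length].
  rewrite !length_nodes. lia.
Qed.

Lemma integrand_numer_poly : is_poly (length poles - 2) integrand_numer.
Proof.
  rewrite poles_length. apply (poly_weaken (mplus X + mminus X)); [lia|].
  apply poly_scal, psi_denom_poly.
Qed.

Lemma reduced_poles_NoDup : NoDup reduced_poles.
Proof.
  apply NoDup_app.
  - exact (NoDup_app_remove_r _ _ poles_NoDup).
  - repeat constructor. simpl; tauto.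
  - intros z Hz [E|[]]. subst z. apply minus_theta_not_right; auto.
Qed.

Lemma reduced_numer_poly : is_poly (length reduced_poles - 2) reduced_numer.
Proof.
  replace (length reduced_poles - 2)%nat with (length (nodes (mplus X) rqp)).
  - apply poly_scal, poly_lprod.
  - unfold reduced_poles, right_poles. rewrite length_app. cbn [length].
    rewrite !length_nodes. lia.
Qed.

Lemma residue_sum (a : R) : (0 < a < phib)%R ->
  lsum poles (fun c => if Rlt_dec (fst c) a then residue poles integrand_numer c else RC 0)
  = RC (q / (q + lam)) * mu_hat X phib rlp (RtoC th).
Proof.
  intros Ha. unfold poles at 1.
  rewrite lsum_left_of_line.
  2: intros c Hc; destruct (right_poles_re c Hc) as [H| ->]; simpl; lra.
  2: intros c Hc; pose proof (left_poles_re c Hc); lra.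
  (* residues left of the line = - residues right of it *)
  rewrite (residues_split right_poles left_poles); fold poles.
  2: exact poles_NoDup.
  2: rewrite poles_length; lia.
  2: exact integrand_numer_poly.
  rewrite (lsum_ext right_poles _ (fun c => residue reduced_poles reduced_numer c * RC (q / (q + lam))))
    by (intros c Hc; rewrite right_pole_residue by auto; ring).
  rewrite <- lsum_scal.
  (* for the reduced function the only other pole is -theta *)
  assert (Hred := residues_split right_poles (RC (- th) :: nil) reduced_numer reduced_poles_NoDup).
  fold reduced_poles in Hred.
  specialize (Hred ltac:(unfold reduced_poles, right_poles; rewrite length_app; simpl; lia)
                    reduced_numer_poly).
  rewrite lsum_cons, theta_residue in Hred. change (lsum nil _) with (RC 0) in Hred.
  replace (lsum right_poles (residue reduced_poles reduced_numer))
    with (- (mu_hat X phib rlp (RtoC th) + RC 0)) by (rewrite Hred; ring).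
  ring.
Qed.

Theorem vertical_integral_value (a : R) : (0 < a < phib)%R ->
  vertical_integral
    (fun u => Cdiv (Cmul (Cmul (Psi_plus X rqp (Cmul Ci (RtoC th))) (mu_hat X phib rlp (Copp u)))
                         (Psi_minus X rqm (Cmul (Copp Ci) u)))
                   (Cadd u (RtoC th)))
    a (Cmul (RtoC (q / (q + lam))) (mu_hat X phib rlp (RtoC th))).
Proof.
  intros Ha.
  replace (Cmul (RtoC (q / (q + lam))) (mu_hat X phib rlp (RtoC th)))
    with (lsum poles (fun c => if Rlt_dec (fst c) a then residue poles integrand_numer c else RC 0))
    by (apply residue_sum; auto).
  apply vertical_integral_rational.
  - exact poles_NoDup.
  - rewrite poles_length. lia.
  - exact integrand_numer_poly.
  - intros c Hc E. apply in_app_or in Hc. destruct Hc as [Hc|Hc].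
    + destruct (right_poles_re c Hc) as [H| ->]; simpl in E; lra.
    + pose proof (left_poles_re c Hc). lra.
  - intros t. apply integrand_rational. simpl. lra.
Qed.

End ResidueComputation.

Theorem lemma10 (X : MEproc)
  (thstar phib q lam th : R) (rqp rqm rlp : nat -> Cx) :
  ME_valid X ->
  (* psi'(0) < 0 *)
  (exists d, derivable_pt_lim (psi X) 0 d /\ d < 0) ->
  (* theta^* : minimiser of psi on its domain; lambda^* = - psi(theta^* ) *)
  psi_dom X thstar -> (forall x, psi_dom X x -> psi X thstar <= psi X x) ->
  q > 0 -> th > 0 ->
  0 < lam -> lam <= - psi X thstar ->
  (* phib = phibar(-lambda): inverse of psi left of theta^* *)
  psi_dom X phib -> phib <= thstar -> psi X phib = - lam ->
  (* rho_k^+(q), rho_j^-(q), rho_k^+(-lambda) *)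
  root_enum X (RtoC q) (fun z => Re z > 0) (mplus X) rqp ->
  root_enum X (RtoC q) (fun z => Re z < 0) (mminus X) rqm ->
  root_enum X (RtoC (- lam)) (fun z => Re z > phib) (mplus X) rlp ->
  (* the roots of both equations are distinct *)
  simple_roots X (RtoC (- lam)) -> simple_roots X (RtoC q) ->
  (* phibar(-lambda), rho_k^+(-lambda), -theta, rho_j^-(q) all distinct *)
  NoDup (RtoC phib :: map rlp (seq 0 (S (mplus X)))
         ++ RtoC (- th) :: map rqm (seq 0 (S (mminus X)))) ->
  forall a, 0 < a -> a < phib ->
    vertical_integral
      (fun u => Cdiv (Cmul (Cmul (Psi_plus X rqp (Cmul Ci (RtoC th)))
                                 (mu_hat X phib rlp (Copp u)))
                           (Psi_minus X rqm (Cmul (Copp Ci) u)))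
                     (Cadd u (RtoC th)))
      a
      (Cmul (RtoC (q / (q + lam))) (mu_hat X phib rlp (RtoC th))).
Proof.
  (* The hypotheses on psi'(0), theta^*, lambda^* and the simplicity of the
     roots are what guarantee that the enumerated roots exist; once they are
     given, the computation only uses their defining properties. *)
  intros HX _ _ _ Hq Hth Hlam _ Hdom _ Hroot Hrqp Hrqm Hrlp _ _ Hdistinct a Ha Hab.
  apply vertical_integral_value; auto; lra.
Qed.
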